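(* In the instance of Outcome Logic with variable assignment described below, for every well-formed program $C$ and all assertions $\varphi,\psi\subseteq\mathcal W(\mathcal S)$: \[\vDash\{\varphi\}\ C\ \{\psi\}\quad\iff\quad\vdash\{\varphi\}\ C\ \{\psi\},\] where $\vdash$ denotes derivability (with no axioms about atomic actions) in the proof system below extended with the rules (Assign) and (Constancy).
   Context: Semiring and weights. Let $\mathcal A=\langle U,+,\cdot,\mathbf 0,\mathbf 1\rangle$ be a partial semiring ($+$ commutative, associative, possibly partial, unit $\mathbf 0$; $\cdot$ total, associative, unit $\mathbf 1$; two-sided distributivity; $\mathbf 0$ annihilates), naturally ordered ($u\le v$ iff $\exists w.\,u+w=v$ is a partial order), Scott continuous ($+$ and $\cdot$ preserve suprema of directed sets in each argument), with a top element. Infinite sums are suprema of finite partial sums. $\mathcal W(X)$: maps $m:X\to U$ with countable support $\mathrm{supp}(m)=\{x:m(x)\ne\mathbf 0\}$ and defined mass $|m|=\sum_{x\in\mathrm{supp}(m)}m(x)$; operations $+$, $u\cdot m$, $m\cdot u$ pointwise; $m_1\sqsubseteq m_2$ iff $m_1+m=m_2$ for some $m$. $\eta(x)(y)=\mathbf 1$ if $x=y$ else $\mathbf 0$; $f^\dagger(m)(y)=\sum_{x\in\mathrm{supp}(m)}m(x)\cdot f(x)(y)$. State instance. $\mathsf{Var}$ is a countable set of variables, $\mathsf{Val}=\mathbb Z$, states are stores $s\in\mathcal S=\mathsf{Var}\to\mathsf{Val}$, and $s[x\mapsto v]$ is the updated store. Atomic actions are assignments $x:=E$ where $E::=x\mid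 v\mid b\mid E_1+E_2\mid E_1-E_2\mid E_1\times E_2$ ($v\in\mathsf{Val}$, $b$ a test) with the standard evaluation $[\![E]\!]_{\mathsf{Exp}}(s)\in\mathsf{Val}$; $[\![x:=E]\!]_{\mathsf{Act}}(s)=\eta(s[x\mapsto[\![E]\!]_{\mathsf{Exp}}(s)])$. Primitive tests are all subsets of $\mathcal S$. Programs. $C::=\mathsf{skip}\mid C_1;C_2\mid C_1+C_2\mid\mathsf{assume}\ e\mid C^{\langle e,e'\rangle}\mid x:=E$; $e::=b\mid u$ ($u\in U$); tests $b$ are Boolean combinations of $\mathsf{true},\mathsf{false}$ and primitive tests $t$, evaluating to $\mathbf 1$ (true) or $\mathbf 0$ (false) with $[\![t]\!](s)=\mathbf 1$ iff $s\in t$; $[\![u]\!](s)=u$. Semantics: $[\![\mathsf{skip}]\!](s)=\eta(s)$; $[\![C_1;C_2]\!](s)=[\![C_2]\!]^\dagger([\![C_1]\!](s))$; $[\![C_1+C_2]\!](s)=[\![C_1]\!](s)+[\![C_2]\!](s)$; $[\![\mathsf{assume}\ e]\!](s)=[\![e]\!](s)\cdot\eta(s)$; $[\![C^{\langle e,e'\rangle}]\!]$ is the least fixed point (pointwise order) of $\Phi(f)(s)=[\![e]\!](s)\cdot f^\dagger([\![C]\!](s))+[\![e']\!](s)\cdot\eta(s)$. Well-formed: semantics total. Assertions. Subsets of $\mathcal W(\mathcal S)$; $\bigoplus_{x\in T}\phi(x)=\{\sum_{t\in T}m_t:m_t\in\phi(t)\ \forall t\}$, $\varphi\oplus\psi$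 the binary case; $u\odot\varphi=\{u\cdot m:m\in\varphi\}$, $\varphi\odot u=\{m\cdot u:m\in\varphi\}$; for $P\subseteq\mathcal S$, $\Box P=\{m:\mathrm{supp}(m)\subseteq P\}$. $\vDash\{\varphi\}C\{\psi\}$ iff $[\![C]\!]^\dagger(m)\in\psi$ for all $m\in\varphi$. Substitution: $\varphi[E/x]=\{m\in\mathcal W(\mathcal S): (\lambda s.\eta(s[x\mapsto[\![E]\!]_{\mathsf{Exp}}(s)]))^\dagger(m)\in\varphi\}$. Free variables of $P\subseteq\mathcal S$: $\mathrm{free}(P)=\{x:\exists s\in P,v\in\mathsf{Val}.\ s[x\mapsto v]\notin P\}$. Modified variables: $\mathrm{mod}(\mathsf{skip})=\mathrm{mod}(\mathsf{assume}\ e)=\emptyset$, $\mathrm{mod}(C_1;C_2)=\mathrm{mod}(C_1+C_2)=\mathrm{mod}(C_1)\cup\mathrm{mod}(C_2)$, $\mathrm{mod}(C^{\langle e,e'\rangle})=\mathrm{mod}(C)$, $\mathrm{mod}(x:=E)=\{x\}$. Proof system rules: (Skip) $\{\varphi\}\mathsf{skip}\{\varphi\}$; (Seq) $\{\varphi\}C_1\{\vartheta\},\{\vartheta\}C_2\{\psi\}\Rightarrow\{\varphi\}C_1;C_2\{\psi\}$; (Plus) $\{\varphi\}C_1\{\psi_1\},\{\varphi\}C_2\{\psi_2\}\Rightarrow\{\varphi\}C_1+C_2\{\psi_1\oplus\psi_2\}$; (Assume) if $[\![e]\!](s)=u$ for all $m\in\varphi$, $s\in\mathrm{supp}(m)$,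 then $\{\varphi\}\mathsf{assume}\ e\{\varphi\odot u\}$; (Iter) if $(\psi_n)_{n\in\mathbb N}$ converges to $\psi_\infty$ (whenever $m_n\in\psi_n$ for all $n$, $\sum_n m_n\in\psi_\infty$) and for all $n$, $\{\varphi_n\}\mathsf{assume}\ e;C\{\varphi_{n+1}\}$ and $\{\varphi_n\}\mathsf{assume}\ e'\{\psi_n\}$, then $\{\varphi_0\}C^{\langle e,e'\rangle}\{\psi_\infty\}$; (False) $\{\emptyset\}C\{\varphi\}$; (True) $\{\varphi\}C\{\mathcal W(\mathcal S)\}$; (Scale) $\{\varphi\}C\{\psi\}\Rightarrow\{u\odot\varphi\}C\{u\odot\psi\}$; (Disj), (Conj): from two triples infer the triple with $\cup$, resp. $\cap$, of pre- and postconditions; (Choice) $\forall t\in T.\{\phi(t)\}C\{\phi'(t)\}\Rightarrow\{\bigoplus_{x\in T}\phi(x)\}C\{\bigoplus_{x\in T}\phi'(x)\}$; (Exists) same premises $\Rightarrow\{\bigcup_t\phi(t)\}C\{\bigcup_t\phi'(t)\}$; (Consequence) $\varphi'\subseteq\varphi$, $\{\varphi\}C\{\psi\}$, $\psi\subseteq\psi'\Rightarrow\{\varphi'\}C\{\psi'\}$; (Assign) $\{\varphi[E/x]\}\ x:=E\ \{\varphi\}$; (Constancy) if $\{\varphi\}C\{\psi\}$ and $\mathrm{free}(P)\cap\mathrm{mod}(C)=\emptyset$ then $\{\varphi\cap\Box P\}C\{\psi\cap\Box P\}$. *)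

From Stdlib Require Import ZArith List Classical ClassicalEpsilon.
Import ListNotations.
Set Implicit Arguments.

Definition nle {U : Type} (add : U -> U -> option U) (u v : U) : Prop :=
  exists w, add u w = Some v.

Definition is_sup {U : Type} (add : U -> U -> option U) (D : U -> Prop) (v : U) : Prop :=
  (forall d, D d -> nle add d v) /\
  (forall w, (forall d, D d -> nle add d w) -> nle add v w).

Definition directed {U : Type} (add : U -> U -> option U) (D : U -> Prop) : Prop :=
  (exists d, D d) /\
  (forall a b, D a -> D b -> exists c, D c /\ nle add a c /\ nle add b c).

Definition obind {A B : Type} (f : A -> option B) (o : option A) : option B :=
  match o with Some a => f a | None => None end.

Record PSR := {
  car :> Type;
  add : car -> car -> option car;
  mul : car -> car -> car;
  zero : car;
  one : car;
  add_comm : forall a b, add a b = add b a;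
  add_assoc : forall a b c,
    obind (fun ab => add ab c) (add a b) = obind (fun bc => add a bc) (add b c);
  add_0l : forall a, add zero a = Some a;
  mul_assoc : forall a b c, mul a (mul b c) = mul (mul a b) c;
  mul_1l : forall a, mul one a = a;
  mul_1r : forall a, mul a one = a;
  mul_addr : forall u v w vw, add v w = Some vw ->
    add (mul u v) (mul u w) = Some (mul u vw);
  mul_addl : forall u v w vw, add v w = Some vw ->
    add (mul v u) (mul w u) = Some (mul vw u);
  mul_0l : forall a, mul zero a = zero;
  mul_0r : forall a, mul a zero = zero;
  (* naturally ordered: u <= v iff exists w, u + w = v is a partial order
     (reflexivity and transitivity hold automatically) *)
  nle_antisym : forall u v, nle add u v -> nle add v u -> u = v;
  dcpo : forall D, directed add D -> exists v, is_sup add D v;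
  add_cont : forall u D d, directed add D -> is_sup add D d ->
    forall v, add u d = Some v <->
      ((forall x, D x -> exists w, add u x = Some w) /\
       is_sup add (fun w => exists x, D x /\ add u x = Some w) v);
  mul_contr : forall u D d, directed add D -> is_sup add D d ->
    is_sup add (fun w => exists x, D x /\ w = mul u x) (mul u d);
  mul_contl : forall u D d, directed add D -> is_sup add D d ->
    is_sup add (fun w => exists x, D x /\ w = mul x u) (mul d u);
  has_top : exists t, forall u, nle add u t
}.

Arguments add {_}.
Arguments mul {_}.
Arguments zero {_}.
Arguments one {_}.


Fixpoint fsum {A : PSR} {I : Type} (a : I -> A) (l : list I) : option A :=
  match l with
  | [] => Some zero
  | i :: l' => obind (fun r => add (a i) r) (fsum a l')
  end.

Definition HasSum {A : PSR} {I : Type} (P : I -> Prop) (a : I -> A) (v : A) : Prop :=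
  (forall l, NoDup l -> Forall P l -> exists r, fsum a l = Some r) /\
  is_sup add (fun r => exists l, NoDup l /\ Forall P l /\ fsum a l = Some r) v.

Definition countable {X : Type} (P : X -> Prop) : Prop :=
  exists f : nat -> option X, forall x, P x -> exists n, f n = Some x.

Definition supp {A : PSR} {X : Type} (m : X -> A) : X -> Prop :=
  fun x => m x <> zero.

Definition isW {A : PSR} {X : Type} (m : X -> A) : Prop :=
  countable (supp m) /\ exists v, HasSum (supp m) m v.

Definition WPlus {A : PSR} {X : Type} (m1 m2 m : X -> A) : Prop :=
  forall x, add (m1 x) (m2 x) = Some (m x).

Definition Wle {A : PSR} {X : Type} (m1 m2 : X -> A) : Prop :=
  exists m, isW m /\ WPlus m1 m m2.

Definition WSum {A : PSR} {X T : Type} (ms : T -> X -> A) (m : X -> A) : Prop :=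
  isW m /\ forall x, HasSum (fun _ : T => True) (fun t => ms t x) (m x).

Definition lscale {A : PSR} {X : Type} (u : A) (m : X -> A) : X -> A :=
  fun x => mul u (m x).
Definition rscale {A : PSR} {X : Type} (m : X -> A) (u : A) : X -> A :=
  fun x => mul (m x) u.

Definition eta {A : PSR} {X : Type} (x : X) : X -> A :=
  fun y => if excluded_middle_informative (x = y) then one else zero.

Definition Bind {A : PSR} {X Y : Type} (f : X -> Y -> A) (m : X -> A) (m' : Y -> A) : Prop :=
  isW m /\ (forall x, isW (f x)) /\ isW m' /\
  forall y, HasSum (supp m) (fun x => mul (m x) (f x y)) (m' y).

Definition Var := nat.
Definition Val := Z.
Definition state := Var -> Val.

Definition update (s : state) (x : Var) (v : Val) : state :=
  fun y => if Nat.eqb y x then v else s y.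

Inductive test :=
  | TTrue | TFalse
  | TPrim (t : state -> Prop)
  | TNot (b : test)
  | TAnd (b1 b2 : test)
  | TOr (b1 b2 : test).

Fixpoint tholds (b : test) (s : state) : Prop :=
  match b with
  | TTrue => True
  | TFalse => False
  | TPrim t => t s
  | TNot b => ~ tholds b s
  | TAnd b1 b2 => tholds b1 s /\ tholds b2 s
  | TOr b1 b2 => tholds b1 s \/ tholds b2 s
  end.

Inductive exp :=
  | EVar (x : Var)
  | EVal (v : Val)
  | ETest (b : test)
  | EAdd (E1 E2 : exp)
  | ESub (E1 E2 : exp)
  | EMul (E1 E2 : exp).

Fixpoint eeval (E : exp) (s : state) : Val :=
  match E with
  | EVar x => s x
  | EVal v => v
  | ETest b => if excluded_middle_informative (tholds b s) then 1%Z else 0%Z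
  | EAdd E1 E2 => (eeval E1 s + eeval E2 s)%Z
  | ESub E1 E2 => (eeval E1 s - eeval E2 s)%Z
  | EMul E1 E2 => (eeval E1 s * eeval E2 s)%Z
  end.

Inductive gexp (A : PSR) :=
  | GTest (b : test)
  | GWeight (u : A).
Arguments GTest {A}.
Arguments GWeight {A}.

Definition geval {A : PSR} (e : gexp A) (s : state) : A :=
  match e with
  | GTest b => if excluded_middle_informative (tholds b s) then one else zero
  | GWeight u => u
  end.

Inductive cmd (A : PSR) :=
  | Skip
  | Seq (C1 C2 : cmd A)
  | Choice (C1 C2 : cmd A)
  | Assume (e : gexp A)
  | Iter (C : cmd A) (e e' : gexp A)
  | Assign (x : Var) (E : exp).
Arguments Skip {A}.
Arguments Assume {A}.
Arguments Assign {A}.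

(* Semantics: Sem C f  means  [[C]] = f  (as a total map state -> W(state)) *)

Definition kernel (A : PSR) := state -> state -> A.

(* Phi(f) = h  for the iteration C^<e,e'> with [[C]] = g *)
Definition PhiRel {A : PSR} (g : kernel A) (e e' : gexp A) (f h : kernel A) : Prop :=
  forall s, isW (h s) /\ exists k, Bind f (g s) k /\
    WPlus (lscale (geval e s) k) (lscale (geval e' s) (eta s)) (h s).

Definition kle {A : PSR} (f g : kernel A) : Prop := forall s, Wle (f s) (g s).

Definition IsLfp {A : PSR} (g : kernel A) (e e' : gexp A) (f : kernel A) : Prop :=
  (forall s, isW (f s)) /\ PhiRel g e e' f f /\
  forall f', (forall s, isW (f' s)) -> PhiRel g e e' f' f' -> kle f f'.

Inductive Sem {A : PSR} : cmd A -> kernel A -> Prop :=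
  | Sem_skip : Sem Skip (fun s => eta s)
  | Sem_seq : forall C1 C2 f1 f2 f,
      Sem C1 f1 -> Sem C2 f2 -> (forall s, Bind f2 (f1 s) (f s)) ->
      Sem (Seq C1 C2) f
  | Sem_choice : forall C1 C2 f1 f2 f,
      Sem C1 f1 -> Sem C2 f2 -> (forall s, isW (f s) /\ WPlus (f1 s) (f2 s) (f s)) ->
      Sem (Choice C1 C2) f
  | Sem_assume : forall e, Sem (Assume e) (fun s => lscale (geval e s) (eta s))
  | Sem_iter : forall C e e' g f,
      Sem C g -> IsLfp g e e' f -> Sem (Iter C e e') f
  | Sem_assign : forall x E, Sem (Assign x E) (fun s => eta (update s x (eeval E s))).

Definition well_formed {A : PSR} (C : cmd A) : Prop := exists f, Sem C f.

Definition assn (A : PSR) := (state -> A) -> Prop.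

Definition IsAssn {A : PSR} (P : assn A) : Prop := forall m, P m -> isW m.

Definition valid {A : PSR} (P : assn A) (C : cmd A) (Q : assn A) : Prop :=
  forall f, Sem C f -> forall m, P m -> exists m', Bind f m m' /\ Q m'.

Definition aW {A : PSR} : assn A := fun m => isW m.
Definition aFalse {A : PSR} : assn A := fun _ => False.
Definition aoplus {A : PSR} (P Q : assn A) : assn A :=
  fun m => isW m /\ exists m1 m2, P m1 /\ Q m2 /\ WPlus m1 m2 m.
Definition abigoplus {A : PSR} {T : Type} (Ph : T -> assn A) : assn A :=
  fun m => exists ms : T -> state -> A, (forall t, Ph t (ms t)) /\ WSum ms m.
Definition abigcup {A : PSR} {T : Type} (Ph : T -> assn A) : assn A :=
  fun m => exists t, Ph t m.
Definition alscale {A : PSR} (u : A) (P : assn A) : assn A :=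
  fun m => exists m0, P m0 /\ m = lscale u m0.
Definition arscale {A : PSR} (P : assn A) (u : A) : assn A :=
  fun m => exists m0, P m0 /\ m = rscale m0 u.
Definition acup {A : PSR} (P Q : assn A) : assn A := fun m => P m \/ Q m.
Definition acap {A : PSR} (P Q : assn A) : assn A := fun m => P m /\ Q m.
Definition aincl {A : PSR} (P Q : assn A) : Prop := forall m, P m -> Q m.
Definition abox {A : PSR} (P : state -> Prop) : assn A :=
  fun m => isW m /\ forall s, supp m s -> P s.

Definition asubst {A : PSR} (P : assn A) (E : exp) (x : Var) : assn A :=
  fun m => isW m /\ exists m', Bind (fun s => eta (update s x (eeval E s))) m m' /\ P m'.

Definition converges {A : PSR} (ps : nat -> assn A) (pinf : assn A) : Prop :=
  forall ms : nat -> state -> A, (forall n, ps n (ms n)) ->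
    forall m, WSum ms m -> pinf m.

Definition free (P : state -> Prop) (x : Var) : Prop :=
  exists s v, P s /\ ~ P (update s x v).

Fixpoint modv {A : PSR} (C : cmd A) (x : Var) : Prop :=
  match C with
  | Skip | Assume _ => False
  | Seq C1 C2 | Choice C1 C2 => modv C1 x \/ modv C2 x
  | Iter C _ _ => modv C x
  | Assign y _ => x = y
  end.

Inductive Deriv {A : PSR} : assn A -> cmd A -> assn A -> Prop :=
  | D_skip : forall P, IsAssn P -> Deriv P Skip P
  | D_seq : forall P R Q C1 C2,
      Deriv P C1 R -> Deriv R C2 Q -> Deriv P (Seq C1 C2) Q
  | D_plus : forall P Q1 Q2 C1 C2,
      Deriv P C1 Q1 -> Deriv P C2 Q2 -> Deriv P (Choice C1 C2) (aoplus Q1 Q2)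
  | D_assume : forall P e u, IsAssn P -> IsAssn (arscale P u) ->
      (forall m s, P m -> supp m s -> geval e s = u) ->
      Deriv P (Assume e) (arscale P u)
  | D_iter : forall (Ps Qs : nat -> assn A) Qinf C e e', IsAssn Qinf ->
      converges Qs Qinf ->
      (forall n, Deriv (Ps n) (Seq (Assume e) C) (Ps (S n))) ->
      (forall n, Deriv (Ps n) (Assume e') (Qs n)) ->
      Deriv (Ps 0) (Iter C e e') Qinf
  | D_false : forall C Q, IsAssn Q -> Deriv aFalse C Q
  | D_true : forall P C, IsAssn P -> Deriv P C aW
  | D_scale : forall P Q C u, IsAssn (alscale u P) -> IsAssn (alscale u Q) ->
      Deriv P C Q -> Deriv (alscale u P) C (alscale u Q)
  | D_disj : forall P1 P2 Q1 Q2 C,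
      Deriv P1 C Q1 -> Deriv P2 C Q2 -> Deriv (acup P1 P2) C (acup Q1 Q2)
  | D_conj : forall P1 P2 Q1 Q2 C,
      Deriv P1 C Q1 -> Deriv P2 C Q2 -> Deriv (acap P1 P2) C (acap Q1 Q2)
  | D_choice : forall (T : Type) (Ph Ph' : T -> assn A) C,
      (forall t, Deriv (Ph t) C (Ph' t)) ->
      Deriv (abigoplus Ph) C (abigoplus Ph')
  | D_exists : forall (T : Type) (Ph Ph' : T -> assn A) C,
      (forall t, Deriv (Ph t) C (Ph' t)) ->
      Deriv (abigcup Ph) C (abigcup Ph')
  | D_conseq : forall P P' Q Q' C, IsAssn P' -> IsAssn Q' ->
      aincl P' P -> Deriv P C Q -> aincl Q Q' -> Deriv P' C Q'
  | D_assign : forall P x E, IsAssn P -> Deriv (asubst P E x) (Assign x E) P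
  | D_constancy : forall P Q C (B : state -> Prop),
      Deriv P C Q -> (forall x, free B x -> modv C x -> False) ->
      Deriv (acap P (abox B)) C (acap Q (abox B)).

From Stdlib Require Import Lia List Permutation Cantor Classical ClassicalEpsilon FunctionalExtensionality.
Import ListNotations.

(* The only delicate rule is (Iter): the least fixed point
   of a loop is identified with the sum, over n, of its n-th unrollings (n passes through
   [assume e; C] followed by [assume e']).  The partial sums of this series are bounded by the
   least fixed point, and by Fubini's theorem and Scott continuity the whole sum is itself a
   fixed point, hence it is the least one; so the invariant sequence of the rule converges to
   the output of the loop.  (Constancy) holds because a command that does not modify the free
   variables of [B] maps weights supported in [B] to weights supported in [B].

   Completeness goes through singleton preconditions: by induction on the semantics,
   {m} C {[[C]]^dagger(m)} is derivable for every weight m.  An arbitrary valid triple then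
   follows by (Exists) over the elements of the precondition and (Consequence). *)

Section NaturalOrder.
Context {A : PSR}.

Definition le (u v : A) : Prop := nle add u v.

Definition oadd (o1 o2 : option A) : option A :=
  match o1, o2 with Some a, Some b => add a b | _, _ => None end.

Lemma oadd_SS (a b : A) : oadd (Some a) (Some b) = add a b.
Proof. reflexivity. Qed.

Lemma oadd_comm o1 o2 : oadd o1 o2 = oadd o2 o1.
Proof. destruct o1, o2; unfold oadd; auto using add_comm. Qed.

Lemma oadd_assoc o1 o2 o3 : oadd (oadd o1 o2) o3 = oadd o1 (oadd o2 o3).
Proof.
  destruct o1 as [a|], o2 as [b|], o3 as [c|]; unfold oadd; auto;
    try (destruct (add a b); auto; fail); try (destruct (add b c); auto; fail).
  exact (add_assoc A a b c).
Qed.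

Lemma oadd_0l o : oadd (Some zero) o = o.
Proof. destruct o; unfold oadd; auto using add_0l. Qed.

Lemma add_0r (a : A) : add a zero = Some a.
Proof. rewrite add_comm; apply add_0l. Qed.

Lemma le_refl (a : A) : le a a.
Proof. exists zero; apply add_0r. Qed.

Lemma le_trans {a b c : A} : le a b -> le b c -> le a c.
Proof.
  intros [w1 H1] [w2 H2].
  assert (E : oadd (oadd (Some a) (Some w1)) (Some w2) = Some c)
    by (rewrite oadd_SS, H1; exact H2).
  rewrite oadd_assoc, (oadd_SS w1) in E.
  destruct (add w1 w2) as [w|]; [exists w; exact E | discriminate].
Qed.

Lemma le0x (a : A) : le zero a.
Proof. exists a; apply add_0l. Qed.

Lemma le_antisym {a b : A} : le a b -> le b a -> a = b.
Proof. apply nle_antisym. Qed.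

Lemma lex0 {a : A} : le a zero -> a = zero.
Proof. intros H; apply le_antisym; auto using le0x. Qed.

Lemma le_addl {a b c : A} : add a b = Some c -> le a c.
Proof. intros H; exists b; exact H. Qed.

Lemma add_le_l {a a' b r' : A} : le a a' -> add a' b = Some r' ->
  exists r, add a b = Some r /\ le r r'.
Proof.
  intros [c Hc] H.
  assert (E : oadd (oadd (Some a) (Some c)) (Some b) = Some r')
    by (rewrite oadd_SS, Hc; exact H).
  rewrite oadd_assoc, (oadd_comm (Some c)), <- oadd_assoc, (oadd_SS a b) in E.
  destruct (add a b) as [r|]; [|discriminate].
  exists r; split; [reflexivity | exists c; exact E].
Qed.

Lemma add_le {a a' b b' r' : A} : le a a' -> le b b' -> add a' b' = Some r' ->
  exists r, add a b = Some r /\ le r r'.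
Proof.
  intros Ha Hb H.
  destruct (add_le_l Ha H) as [r1 [H1 L1]]. rewrite add_comm in H1.
  destruct (add_le_l Hb H1) as [r2 [H2 L2]].
  exists r2; split; [rewrite add_comm; exact H2 | exact (le_trans L2 L1)].
Qed.

Lemma add_le_eq {a a' b b' r r' : A} : le a a' -> le b b' -> add a' b' = Some r' ->
  add a b = Some r -> le r r'.
Proof.
  intros Ha Hb H H'. destruct (add_le Ha Hb H) as [r0 [E L]].
  rewrite H' in E; injection E as <-; exact L.
Qed.

Lemma mul_le_l (u : A) {a b : A} : le a b -> le (mul u a) (mul u b).
Proof. intros [w H]. exists (mul u w). apply mul_addr, H. Qed.

Lemma mul_le_r (u : A) {a b : A} : le a b -> le (mul a u) (mul b u).
Proof. intros [w H]. exists (mul w u). apply mul_addl, H. Qed.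

Lemma add_neq0 {a b c : A} : add a b = Some c -> c <> zero -> a <> zero \/ b <> zero.
Proof.
  intros H Hc. destruct (classic (a = zero)) as [->|Ha]; [|left; exact Ha].
  rewrite add_0l in H. injection H as ->. right; exact Hc.
Qed.

End NaturalOrder.

Arguments oadd : simpl never.

Section FiniteSums.
Context {A : PSR}.

Definition ofsum {I : Type} (b : I -> option A) (l : list I) : option A :=
  fold_right (fun i r => oadd (b i) r) (Some zero) l.

Lemma fsum_ofsum {I : Type} (a : I -> A) l : fsum a l = ofsum (fun i => Some (a i)) l.
Proof. induction l; simpl; [reflexivity|]. rewrite IHl. destruct (ofsum _ l); reflexivity. Qed.

Lemma fsum_cons {I : Type} (a : I -> A) i l : fsum a (i :: l) = oadd (Some (a i)) (fsum a l).
Proof. simpl. destruct (fsum a l); reflexivity. Qed.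

Lemma ofsum_app {I : Type} (b : I -> option A) l1 l2 :
  ofsum b (l1 ++ l2) = oadd (ofsum b l1) (ofsum b l2).
Proof. induction l1; simpl; [rewrite oadd_0l | rewrite IHl1, oadd_assoc]; reflexivity. Qed.

Lemma ofsum_perm {I : Type} (b : I -> option A) {l l'} :
  Permutation l l' -> ofsum b l = ofsum b l'.
Proof.
  induction 1; simpl; try congruence.
  rewrite <- !oadd_assoc, (oadd_comm (b y)); reflexivity.
Qed.

Lemma ofsum_oadd {I : Type} (b c : I -> option A) l :
  ofsum (fun i => oadd (b i) (c i)) l = oadd (ofsum b l) (ofsum c l).
Proof.
  induction l; simpl; [rewrite oadd_0l; reflexivity|].
  rewrite IHl, !oadd_assoc. f_equal.
  rewrite <- !oadd_assoc. f_equal. apply oadd_comm.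
Qed.

Lemma ofsum_swap {I J : Type} (b : I -> J -> option A) li lj :
  ofsum (fun i => ofsum (b i) lj) li = ofsum (fun j => ofsum (fun i => b i j) li) lj.
Proof.
  induction li; simpl.
  - induction lj; simpl; [reflexivity|]. rewrite <- IHlj, oadd_0l; reflexivity.
  - rewrite IHli, <- ofsum_oadd; reflexivity.
Qed.

Lemma ofsum_ext {I : Type} (b c : I -> option A) l :
  (forall i, In i l -> b i = c i) -> ofsum b l = ofsum c l.
Proof. induction l; simpl; intros H; [reflexivity|]. rewrite H, IHl; auto. Qed.

Lemma fsum_app {I : Type} (a : I -> A) l1 l2 : fsum a (l1 ++ l2) = oadd (fsum a l1) (fsum a l2).
Proof. rewrite !fsum_ofsum; apply ofsum_app. Qed.

Lemma fsum_perm {I : Type} (a : I -> A) {l l'} : Permutation l l' -> fsum a l = fsum a l'.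
Proof. rewrite !fsum_ofsum; apply ofsum_perm. Qed.

Lemma fsum_map {I J : Type} (a : I -> A) (g : J -> I) l :
  fsum a (map g l) = fsum (fun j => a (g j)) l.
Proof. induction l; simpl; congruence. Qed.

Lemma fsum_ext {I : Type} (a b : I -> A) l : (forall i, In i l -> a i = b i) -> fsum a l = fsum b l.
Proof. rewrite !fsum_ofsum; intros H; apply ofsum_ext; intros i Hi; rewrite H; auto. Qed.

Lemma fsum_add {I : Type} (a b c : I -> A) l : (forall i, add (a i) (b i) = Some (c i)) ->
  fsum c l = oadd (fsum a l) (fsum b l).
Proof.
  intros H. rewrite !fsum_ofsum, <- ofsum_oadd. apply ofsum_ext. intros i _; rewrite oadd_SS, H; reflexivity.
Qed.

Lemma fsum_zero {I : Type} (l : list I) : fsum (fun _ => (@zero A)) l = Some zero.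
Proof. induction l; simpl; [reflexivity|]. rewrite IHl; apply add_0l. Qed.

Lemma fsum_mul_l {I : Type} (a : I -> A) u {l r} :
  fsum a l = Some r -> fsum (fun i => mul u (a i)) l = Some (mul u r).
Proof.
  revert r; induction l; simpl; intros r H.
  - injection H as <-; rewrite mul_0r; reflexivity.
  - destruct (fsum a l) as [r'|]; [|discriminate].
    rewrite (IHl r' eq_refl). apply mul_addr, H.
Qed.

Lemma fsum_mul_r {I : Type} (a : I -> A) u {l r} :
  fsum a l = Some r -> fsum (fun i => mul (a i) u) l = Some (mul r u).
Proof.
  revert r; induction l; simpl; intros r H.
  - injection H as <-; rewrite mul_0l; reflexivity.
  - destruct (fsum a l) as [r'|]; [|discriminate].
    rewrite (IHl r' eq_refl). apply mul_addl, H.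
Qed.

Lemma fsum_le {I : Type} {a b : I -> A} {l r'} : (forall i, In i l -> le (a i) (b i)) ->
  fsum b l = Some r' -> exists r, fsum a l = Some r /\ le r r'.
Proof.
  revert r'; induction l; simpl; intros r' H E.
  - exists zero; split; [reflexivity | injection E as <-; apply le_refl].
  - destruct (fsum b l) as [s'|]; [|discriminate].
    destruct (IHl s') as [s [E1 L1]]; auto.
    rewrite E1. exact (add_le (H a0 (or_introl eq_refl)) L1 E).
Qed.

Definition cfilter {I : Type} (P : I -> Prop) (l : list I) : list I :=
  filter (fun x => if excluded_middle_informative (P x) then true else false) l.

Lemma cfilter_In {I : Type} (P : I -> Prop) l x : In x (cfilter P l) <-> In x l /\ P x.
Proof.
  unfold cfilter; rewrite filter_In.
  destruct (excluded_middle_informative (P x)); intuition discriminate.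
Qed.

Lemma NoDup_cfilter {I : Type} (P : I -> Prop) l : NoDup l -> NoDup (cfilter P l).
Proof. apply NoDup_filter. Qed.

Lemma fsum_cfilter {I : Type} (a : I -> A) (P : I -> Prop) l :
  (forall i, In i l -> ~ P i -> a i = zero) -> fsum a (cfilter P l) = fsum a l.
Proof.
  induction l as [|i l IH]; simpl; intros H; [reflexivity|].
  unfold cfilter in *; simpl.
  destruct (excluded_middle_informative (P i)) as [Pi|Pi]; simpl; rewrite IH; auto.
  rewrite H by auto. destruct (fsum a l); simpl; [rewrite add_0l|]; reflexivity.
Qed.

Lemma fsum_incl {I : Type} (a : I -> A) {l1 l2 r} : NoDup l1 -> NoDup l2 -> incl l1 l2 ->
  fsum a l2 = Some r -> exists r1, fsum a l1 = Some r1 /\ le r1 r.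
Proof.
  intros N1 N2 Hi E.
  assert (Hp : Permutation l2 (l1 ++ cfilter (fun x => ~ In x l1) l2)).
  { apply NoDup_Permutation; auto.
    - apply NoDup_app; auto using NoDup_cfilter.
      intros x H1 H2. apply cfilter_In in H2. tauto.
    - intros x; rewrite in_app_iff, cfilter_In.
      destruct (classic (In x l1)); intuition. }
  rewrite (fsum_perm a Hp), fsum_app in E.
  destruct (fsum a l1) as [r1|]; [|discriminate].
  destruct (fsum a _) as [r2|]; [|discriminate].
  exists r1; split; [reflexivity | exact (le_addl E)].
Qed.

Definition lunion {I : Type} (l1 l2 : list I) : list I :=
  nodup (fun x y => excluded_middle_informative (x = y)) (l1 ++ l2).

Lemma NoDup_lunion {I : Type} (l1 l2 : list I) : NoDup (lunion l1 l2).
Proof. apply NoDup_nodup. Qed.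

Lemma incl_lunion_l {I : Type} (l1 l2 : list I) : incl l1 (lunion l1 l2).
Proof. intros x H; unfold lunion; rewrite nodup_In; apply in_or_app; auto. Qed.

Lemma incl_lunion_r {I : Type} (l1 l2 : list I) : incl l2 (lunion l1 l2).
Proof. intros x H; unfold lunion; rewrite nodup_In; apply in_or_app; auto. Qed.

End FiniteSums.

Section InfiniteSums.
Context {A : PSR}.

Definition Sum {I : Type} (a : I -> A) (v : A) : Prop := HasSum (fun _ : I => True) a v.

Definition fsum_defined {I : Type} (a : I -> A) : Prop :=
  forall l, NoDup l -> exists r, fsum a l = Some r.

Definition partial_sum {I : Type} (a : I -> A) (r : A) : Prop :=
  exists l, NoDup l /\ fsum a l = Some r.

Lemma is_sup_ext (D D' : A -> Prop) v :
  (forall x, D x <-> D' x) -> is_sup add D v -> is_sup add D' v.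
Proof.
  intros E [H1 H2]. split.
  - intros d Hd; apply H1, E, Hd.
  - intros w Hw; apply H2; intros d Hd; apply Hw, E, Hd.
Qed.

Lemma is_sup_uniq (D : A -> Prop) v w : is_sup add D v -> is_sup add D w -> v = w.
Proof. intros [H1 H2] [H3 H4]. apply le_antisym; [apply H2 | apply H4]; auto. Qed.

Lemma Forall_True {I : Type} (l : list I) : Forall (fun _ => True) l.
Proof. apply Forall_forall; auto. Qed.

Lemma Sum_iff {I : Type} (a : I -> A) v :
  Sum a v <-> fsum_defined a /\ is_sup add (partial_sum a) v.
Proof.
  unfold Sum, HasSum, fsum_defined, partial_sum. split; intros [H1 H2]; split.
  - intros l N; apply H1; auto using Forall_True.
  - revert H2; apply is_sup_ext. intros x; split.
    + intros (l & N & _ & E); eauto.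
    + intros (l & N & E); exists l; auto using Forall_True.
  - intros l N _; apply H1; auto.
  - revert H2; apply is_sup_ext. intros x; split.
    + intros (l & N & E); exists l; auto using Forall_True.
    + intros (l & N & _ & E); eauto.
Qed.

Lemma directed_partial_sum {I : Type} {a : I -> A} :
  fsum_defined a -> directed add (partial_sum a).
Proof.
  intros H. split.
  - exists zero, []; split; [constructor | reflexivity].
  - intros x y (l1 & N1 & E1) (l2 & N2 & E2).
    destruct (H (lunion l1 l2) (NoDup_lunion l1 l2)) as [r Er].
    exists r; split; [exists (lunion l1 l2); split; auto using NoDup_lunion|].
    destruct (fsum_incl a N1 (NoDup_lunion l1 l2) (incl_lunion_l l1 l2) Er) as [r1 [F1 L1]].
    destruct (fsum_incl a N2 (NoDup_lunion l1 l2) (incl_lunion_r l1 l2) Er) as [r2 [F2 L2]].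
    rewrite E1 in F1; rewrite E2 in F2. injection F1 as <-; injection F2 as <-. auto.
Qed.

Lemma Sum_fsum_defined {I : Type} {a : I -> A} {v} : Sum a v -> fsum_defined a.
Proof. intros H; apply Sum_iff in H; tauto. Qed.

Lemma fsum_le_Sum {I : Type} {a : I -> A} {v l r} :
  Sum a v -> NoDup l -> fsum a l = Some r -> le r v.
Proof. intros H N E. apply Sum_iff in H as [_ [H _]]. apply H. exists l; auto. Qed.

Lemma Sum_least {I : Type} {a : I -> A} {v} w : Sum a v ->
  (forall l r, NoDup l -> fsum a l = Some r -> le r w) -> le v w.
Proof.
  intros H B. apply Sum_iff in H as [_ [_ H]]. apply H.
  intros d (l & N & E). exact (B l d N E).
Qed.

Lemma Sum_uniq {I : Type} {a : I -> A} {v w} : Sum a v -> Sum a w -> v = w.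
Proof.
  intros H1 H2. apply Sum_iff in H1, H2. exact (is_sup_uniq _ _ _ (proj2 H1) (proj2 H2)).
Qed.

Lemma Sum_exists_le {I : Type} (a : I -> A) w :
  (forall l, NoDup l -> exists r, fsum a l = Some r /\ le r w) -> exists v, Sum a v /\ le v w.
Proof.
  intros H.
  assert (AD : fsum_defined a) by (intros l N; destruct (H l N) as [r [E _]]; eauto).
  destruct (dcpo A (directed_partial_sum AD)) as [v Hv].
  exists v; split; [apply Sum_iff; auto|].
  apply Hv. intros d (l & N & E). destruct (H l N) as [r [E' L]].
  rewrite E in E'; injection E' as <-; exact L.
Qed.

Lemma Sum_exists_pointwise_le {I : Type} {a b : I -> A} {w} :
  Sum b w -> (forall i, le (a i) (b i)) -> exists v, Sum a v /\ le v w.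
Proof.
  intros H L. apply Sum_exists_le. intros l N.
  destruct (Sum_fsum_defined H l N) as [rb Eb].
  destruct (fsum_le (fun i _ => L i) Eb) as [r [E Lr]].
  exists r; split; [exact E | exact (le_trans Lr (fsum_le_Sum H N Eb))].
Qed.

Lemma Sum_le {I : Type} {a b : I -> A} {v w} :
  Sum a v -> Sum b w -> (forall i, le (a i) (b i)) -> le v w.
Proof.
  intros Ha Hb L. destruct (Sum_exists_pointwise_le Hb L) as [v' [H' L']].
  rewrite (Sum_uniq Ha H'); exact L'.
Qed.

Lemma le_Sum_term {I : Type} {a : I -> A} {v} i : Sum a v -> le (a i) v.
Proof.
  intros H. apply (fsum_le_Sum (l := [i]) H); [repeat constructor; auto | apply add_0r].
Qed.

Lemma fsum_single {I : Type} (a : I -> A) i0 : (forall i, i <> i0 -> a i = zero) ->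
  forall l, NoDup l -> (fsum a l = Some (a i0) /\ In i0 l) \/ (fsum a l = Some zero /\ ~ In i0 l).
Proof.
  intros Z l N. induction N as [|x l Nx N IH]; [right; simpl; auto|].
  rewrite fsum_cons. destruct (classic (x = i0)) as [->|ne].
  - destruct IH as [[_ H]|[E H]]; [tauto|].
    left. rewrite E, oadd_SS, add_0r. simpl; auto.
  - rewrite (Z x ne), oadd_0l. simpl.
    destruct IH as [[E H]|[E H]]; [left|right]; split; auto.
    intros [H'|H']; auto.
Qed.

Lemma Sum_single {I : Type} (a : I -> A) i0 v :
  (forall i, i <> i0 -> a i = zero) -> a i0 = v -> Sum a v.
Proof.
  intros Z <-. apply Sum_iff. split; [|split].
  - intros l N. destruct (fsum_single a i0 Z l N) as [[E _]|[E _]]; eauto.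
  - intros d (l & N & E).
    destruct (fsum_single a i0 Z l N) as [[E' _]|[E' _]]; rewrite E' in E; injection E as <-;
      [apply le_refl | apply le0x].
  - intros w H. apply H. exists [i0]. split; [repeat constructor; auto | apply add_0r].
Qed.

Lemma Sum_zero {I : Type} (a : I -> A) : (forall i, a i = zero) -> Sum a zero.
Proof.
  intros Z. assert (E : forall l, fsum a l = Some zero).
  { intros l. rewrite (fsum_ext a (fun _ => zero)); auto using fsum_zero. }
  apply Sum_iff. split; [|split].
  - intros l _; eauto.
  - intros d (l & _ & E'). rewrite E in E'. injection E' as <-; apply le_refl.
  - intros w _. apply le0x.
Qed.

Lemma Sum_neq0 {I : Type} {a : I -> A} {v} : Sum a v -> v <> zero -> exists i, a i <> zero.
Proof.
  intros H Hv. apply NNPP; intros C. apply Hv, (Sum_uniq H), Sum_zero.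
  intros i. apply NNPP; intros C'. apply C; eauto.
Qed.

Lemma Sum_mul_l {I : Type} {a : I -> A} {v} u : Sum a v -> Sum (fun i => mul u (a i)) (mul u v).
Proof.
  intros H. apply Sum_iff in H as [AD S].
  pose proof (mul_contr A u (directed_partial_sum AD) S) as M.
  apply Sum_iff. split.
  - intros l N. destruct (AD l N) as [r E]. exists (mul u r). apply fsum_mul_l, E.
  - revert M; apply is_sup_ext. intros x; split.
    + intros (y & (l & N & E) & ->). exists l; split; [exact N | apply fsum_mul_l, E].
    + intros (l & N & E). destruct (AD l N) as [r E']. exists r; split; [exists l; auto|].
      rewrite (fsum_mul_l a u E') in E. congruence.
Qed.

Lemma Sum_mul_r {I : Type} {a : I -> A} {v} u : Sum a v -> Sum (fun i => mul (a i) u) (mul v u).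
Proof.
  intros H. apply Sum_iff in H as [AD S].
  pose proof (mul_contl A u (directed_partial_sum AD) S) as M.
  apply Sum_iff. split.
  - intros l N. destruct (AD l N) as [r E]. exists (mul r u). apply fsum_mul_r, E.
  - revert M; apply is_sup_ext. intros x; split.
    + intros (y & (l & N & E) & ->). exists l; split; [exact N | apply fsum_mul_r, E].
    + intros (l & N & E). destruct (AD l N) as [r E']. exists r; split; [exists l; auto|].
      rewrite (fsum_mul_r a u E') in E. congruence.
Qed.

Lemma add_sup_defined {D : A -> Prop} {d} u : directed add D -> is_sup add D d ->
  (forall x, D x -> exists r, add u x = Some r) -> exists r, add u d = Some r.
Proof.
  intros Dir S H.
  set (D' := fun w => exists x, D x /\ add u x = Some w).
  assert (Dir' : directed add D').
  { destruct Dir as [[x0 Hx0] Dir]. split.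
    - destruct (H x0 Hx0) as [r Er]. exists r, x0; auto.
    - intros w1 w2 (x1 & D1 & E1) (x2 & D2 & E2).
      destruct (Dir x1 x2 D1 D2) as (c & Dc & L1 & L2).
      destruct (H c Dc) as [w3 E3]. exists w3. split; [exists c; auto|].
      split; [exact (add_le_eq (le_refl u) L1 E3 E1) | exact (add_le_eq (le_refl u) L2 E3 E2)]. }
  destruct (dcpo A Dir') as [v Hv]. exists v.
  apply (add_cont A u Dir S v). split; auto.
Qed.

Lemma add_sup_le {D : A -> Prop} {d u r} w : directed add D -> is_sup add D d ->
  add u d = Some r -> (forall x r', D x -> add u x = Some r' -> le r' w) -> le r w.
Proof.
  intros Dir S E H. apply (add_cont A u Dir S r) in E as [_ [_ E]].
  apply E. intros d' (x & Dx & Ex). exact (H x d' Dx Ex).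
Qed.

Lemma Sum_add {I : Type} {a b c : I -> A} {v w z} : Sum a v -> Sum b w -> add v w = Some z ->
  (forall i, add (a i) (b i) = Some (c i)) -> Sum c z.
Proof.
  intros Ha Hb E P.
  assert (Fc : forall l, NoDup l -> exists r, fsum c l = Some r /\ le r z).
  { intros l N. rewrite (fsum_add a b c l P).
    destruct (Sum_fsum_defined Ha l N) as [ra Ea]. destruct (Sum_fsum_defined Hb l N) as [rb Eb].
    rewrite Ea, Eb, oadd_SS. exact (add_le (fsum_le_Sum Ha N Ea) (fsum_le_Sum Hb N Eb) E). }
  apply Sum_iff. split; [|split].
  - intros l N; destruct (Fc l N) as [r [Er _]]; eauto.
  - intros d (l & N & Ed). destruct (Fc l N) as [r [Er L]].
    rewrite Er in Ed; injection Ed as <-; exact L.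
  - intros u Hu.
    apply Sum_iff in Ha as [ADa Sa]. apply Sum_iff in Hb as [ADb Sb].
    rewrite add_comm in E.
    apply (add_sup_le u (directed_partial_sum ADa) Sa E).
    intros x r' (l1 & N1 & E1) Ex. rewrite add_comm in Ex.
    apply (add_sup_le u (directed_partial_sum ADb) Sb Ex).
    intros y r'' (l2 & N2 & E2) Ey.
    pose proof (NoDup_lunion l1 l2) as N.
    destruct (ADa _ N) as [xa Exa]. destruct (ADb _ N) as [yb Eyb].
    destruct (fsum_incl a N1 N (incl_lunion_l l1 l2) Exa) as [x' [F1 L1]].
    destruct (fsum_incl b N2 N (incl_lunion_r l1 l2) Eyb) as [y' [F2 L2]].
    rewrite E1 in F1; injection F1 as <-. rewrite E2 in F2; injection F2 as <-.
    destruct (Fc _ N) as [rc [Erc _]].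
    assert (Exy : add xa yb = Some rc) by (rewrite <- Erc, (fsum_add a b c _ P), Exa, Eyb; reflexivity).
    apply (le_trans (add_le_eq L1 L2 Exy Ey)), Hu. exists (lunion l1 l2); auto.
Qed.

Lemma Sum_add_inv {I : Type} {a b c : I -> A} {v w z} : Sum a v -> Sum b w -> Sum c z ->
  (forall i, add (a i) (b i) = Some (c i)) -> add v w = Some z.
Proof.
  intros Ha Hb Hc P.
  pose proof Ha as Ha'. apply Sum_iff in Ha' as [ADa Sa].
  pose proof Hb as Hb'. apply Sum_iff in Hb' as [ADb Sb].
  assert (H1 : forall x, partial_sum a x -> exists r, add x w = Some r).
  { intros x (l1 & N1 & E1).
    apply (add_sup_defined x (directed_partial_sum ADb) Sb).
    intros y (l2 & N2 & E2).
    pose proof (NoDup_lunion l1 l2) as N.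
    destruct (ADa _ N) as [xa Exa]. destruct (ADb _ N) as [yb Eyb].
    destruct (fsum_incl a N1 N (incl_lunion_l l1 l2) Exa) as [x' [F1 L1]].
    destruct (fsum_incl b N2 N (incl_lunion_r l1 l2) Eyb) as [y' [F2 L2]].
    rewrite E1 in F1; injection F1 as <-. rewrite E2 in F2; injection F2 as <-.
    destruct (Sum_fsum_defined Hc _ N) as [rc Erc].
    rewrite (fsum_add a b c _ P), Exa, Eyb, oadd_SS in Erc.
    destruct (add_le L1 L2 Erc) as [r [Er _]]. eauto. }
  destruct (add_sup_defined w (directed_partial_sum ADa) Sa) as [z' Ez'].
  { intros x Hx. destruct (H1 x Hx) as [r Er]. exists r; rewrite add_comm; exact Er. }
  rewrite add_comm in Ez'.
  rewrite (Sum_uniq Hc (Sum_add Ha Hb Ez' P)). exact Ez'.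
Qed.

End InfiniteSums.

Section Interchange.
Context {A : PSR}.

Definition oget (o : option A) : A := match o with Some x => x | None => zero end.

Lemma Sum_fsum {I J : Type} (a : I -> J -> A) (b : I -> A) : (forall i, Sum (a i) (b i)) ->
  forall li r, fsum b li = Some r ->
  exists c : J -> A, (forall j, fsum (fun i => a i j) li = Some (c j)) /\ Sum c r.
Proof.
  intros H li. induction li as [|i l IH]; intros r E.
  - injection E as <-. exists (fun _ => zero). split; [reflexivity | apply Sum_zero; auto].
  - rewrite fsum_cons in E. destruct (fsum b l) as [r1|]; [|discriminate].
    destruct (IH r1 eq_refl) as [c1 [Ec1 S1]]. rewrite oadd_SS in E.
    assert (D : forall j, add (a i j) (c1 j) = Some (oget (add (a i j) (c1 j)))).
    { intros j. destruct (add_le (le_Sum_term j (H i)) (le_Sum_term j S1) E) as [x [Ex _]].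
      rewrite Ex; reflexivity. }
    exists (fun j => oget (add (a i j) (c1 j))). split.
    + intros j. rewrite fsum_cons, Ec1, oadd_SS. apply D.
    + exact (Sum_add (H i) S1 E D).
Qed.

Section DoubleSums.
Context {I J : Type} (a : I -> J -> A) (b : I -> A) (v : A).
Hypothesis rows : forall i, Sum (a i) (b i).
Hypothesis total : Sum b v.

Lemma double_fsum_le lj li : NoDup lj -> NoDup li ->
  exists r, ofsum (fun j => ofsum (fun i => Some (a i j)) li) lj = Some r /\ le r v.
Proof.
  intros Nj Ni. rewrite <- ofsum_swap.
  rewrite (ofsum_ext _ (fun i => Some (oget (fsum (a i) lj)))).
  2:{ intros i _. rewrite <- fsum_ofsum.
      destruct (Sum_fsum_defined (rows i) lj Nj) as [s ->]; reflexivity. }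
  rewrite <- fsum_ofsum.
  destruct (Sum_fsum_defined total li Ni) as [rb Eb].
  assert (L : forall i, In i li -> le (oget (fsum (a i) lj)) (b i)).
  { intros i _. destruct (Sum_fsum_defined (rows i) lj Nj) as [s Es]. rewrite Es.
    exact (fsum_le_Sum (rows i) Nj Es). }
  destruct (fsum_le L Eb) as [r [Er Lr]].
  exists r; split; [exact Er | exact (le_trans Lr (fsum_le_Sum total Ni Eb))].
Qed.

Lemma column_fsum_le (c : J -> A) : (forall j, Sum (fun i => a i j) (c j)) ->
  forall lj, NoDup lj -> exists r, fsum c lj = Some r /\ le r v.
Proof.
  intros cols lj Nj. induction Nj as [|j lj Nj' Nj IH]; [exists zero; split; auto using le0x|].
  destruct IH as [s [Es _]].
  destruct (Sum_fsum (fun j i => a i j) c cols lj s Es) as [c' [Ec' Sc']].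
  assert (D : forall i, add (a i j) (c' i) = Some (oget (add (a i j) (c' i)))).
  { intros i. destruct (Sum_fsum_defined (rows i) (j :: lj) (NoDup_cons _ Nj' Nj)) as [x Ex].
    rewrite fsum_cons, Ec', oadd_SS in Ex. rewrite Ex; reflexivity. }
  destruct (Sum_exists_le (fun i => oget (add (a i j) (c' i))) v) as [z [Sz Lz]].
  { intros li Ni. destruct (double_fsum_le (j :: lj) li (NoDup_cons _ Nj' Nj) Ni) as [r [Er Lr]].
    exists r; split; [|exact Lr]. rewrite <- Er, ofsum_swap, fsum_ofsum. apply ofsum_ext.
    intros i _. rewrite <- D. simpl. rewrite <- fsum_ofsum, Ec'. reflexivity. }
  exists z; split; [|exact Lz]. rewrite fsum_cons, Es, oadd_SS.
  exact (Sum_add_inv (cols j) Sc' Sz D).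
Qed.

Lemma Fubini : exists c : J -> A, (forall j, Sum (fun i => a i j) (c j)) /\ Sum c v.
Proof.
  assert (S1 : forall j, exists cj, Sum (fun i => a i j) cj /\ le cj v).
  { intros j. apply (Sum_exists_pointwise_le total). intros i; exact (le_Sum_term j (rows i)). }
  destruct (choice _ S1) as [c Hc].
  assert (cols : forall j, Sum (fun i => a i j) (c j)) by (intros j; apply Hc).
  destruct (Sum_exists_le c v (column_fsum_le c cols)) as [v' [Sv' Lv']].
  exists c; split; [exact cols|].
  replace v with v'; [exact Sv'|]. apply le_antisym; [exact Lv'|].
  apply (Sum_least v' total). intros li rb Ni Eb.
  destruct (Sum_fsum a b rows li rb Eb) as [r [Er Sr]].
  apply (Sum_le Sr Sv'). intros j. exact (fsum_le_Sum (cols j) Ni (Er j)).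
Qed.

End DoubleSums.

Lemma HasSum_Sum {I : Type} (P : I -> Prop) (a : I -> A) v :
  (forall i, ~ P i -> a i = zero) -> HasSum P a v <-> Sum a v.
Proof.
  intros Z.
  assert (Filter : forall l r, NoDup l -> fsum a l = Some r ->
            NoDup (cfilter P l) /\ Forall P (cfilter P l) /\ fsum a (cfilter P l) = Some r).
  { intros l r N E. split; [apply NoDup_cfilter, N|split].
    - apply Forall_forall. intros y Hy. apply cfilter_In in Hy; tauto.
    - rewrite fsum_cfilter; auto. }
  unfold Sum, HasSum. split; intros [H1 H2]; split.
  - intros l N _. rewrite <- (fsum_cfilter a P l (fun i _ => Z i)).
    apply H1; [apply NoDup_cfilter, N|].
    apply Forall_forall. intros x Hx. apply cfilter_In in Hx; tauto.
  - revert H2; apply is_sup_ext. intros x; split.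
    + intros (l & N & _ & E); exists l; auto using Forall_True.
    + intros (l & N & _ & E). exists (cfilter P l). apply Filter; auto.
  - intros l N _. apply H1; auto using Forall_True.
  - revert H2; apply is_sup_ext. intros x; split.
    + intros (l & N & _ & E). exists (cfilter P l). apply Filter; auto.
    + intros (l & N & _ & E); exists l; auto using Forall_True.
Qed.

Lemma Sum_reindex {I J : Type} (a : I -> A) (g : J -> I) (h : I -> J) v :
  (forall x y, g x = g y -> x = y) -> (forall i, a i <> zero -> g (h i) = i) ->
  Sum a v -> Sum (fun j => a (g j)) v.
Proof.
  intros Inj Gh H. apply Sum_iff in H as [AD S].
  assert (Img : forall l', NoDup l' -> NoDup (map g l') /\ fsum a (map g l') = fsum (fun j => a (g j)) l').
  { intros l' N. split; [|apply fsum_map].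
    apply NoDup_map_NoDup_ForallPairs; auto. intros x y _ _; apply Inj. }
  assert (Pre : forall l, NoDup l -> exists l', NoDup l' /\ fsum (fun j => a (g j)) l' = fsum a l).
  { intros l N. set (l1 := cfilter (fun i => a i <> zero) l).
    assert (E1 : map g (map h l1) = l1).
    { rewrite map_map. rewrite <- (map_id l1) at 2. apply map_ext_in.
      intros i Hi. apply cfilter_In in Hi. apply Gh; tauto. }
    exists (map h l1). split.
    - apply (NoDup_map_inv g). rewrite E1. apply NoDup_cfilter, N.
    - rewrite <- (fsum_map a g), E1. apply fsum_cfilter. intros i _ Hi. apply NNPP, Hi. }
  apply Sum_iff. split.
  - intros l' N. destruct (Img l' N) as [N' <-]. apply AD, N'.
  - revert S; apply is_sup_ext. intros x; split.
    + intros (l & N & E). destruct (Pre l N) as [l' [N' E']]. exists l'; split; congruence.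
    + intros (l' & N & E). destruct (Img l' N) as [N' E']. exists (map g l'); split; congruence.
Qed.

Lemma Sum_nat_shift (a : nat -> A) z :
  Sum a z -> exists w, Sum (fun n => a (S n)) w /\ add (a 0) w = Some z.
Proof.
  intros H.
  set (a1 := fun n => match n with 0 => a 0 | S _ => zero end).
  set (a2 := fun n => match n with 0 => zero | S _ => a n end).
  assert (S1 : Sum a1 (a 0)) by (apply (Sum_single _ 0); [intros [|i] Hi; [congruence|reflexivity] | reflexivity]).
  destruct (@Sum_exists_pointwise_le A nat a2 a z H) as [w [S2 _]].
  { intros [|i]; [apply le0x | apply le_refl]. }
  exists w. split.
  - apply (Sum_reindex a2 S pred w); auto. intros [|i] Hi; simpl in *; congruence.
  - apply (Sum_add_inv S1 S2 H). intros [|i]; [apply add_0r | apply add_0l].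
Qed.

End Interchange.

Section Weights.
Context {A : PSR}.

Definition isWK {X Y : Type} (f : X -> Y -> A) : Prop := forall x, isW (f x).

Lemma notin_supp {X : Type} (m : X -> A) x : ~ supp m x -> m x = zero.
Proof. unfold supp; intros H; apply NNPP, H. Qed.

Lemma isW_Sum {X : Type} {m : X -> A} : isW m -> exists v, Sum m v.
Proof. intros [_ [v H]]. exists v. apply (HasSum_Sum (supp m)); auto using notin_supp. Qed.

Lemma isW_intro {X : Type} (m : X -> A) v : countable (supp m) -> Sum m v -> isW m.
Proof. intros C S. split; [exact C|]. exists v. apply (HasSum_Sum (supp m)); auto using notin_supp. Qed.

Lemma countable_sub {X : Type} (P Q : X -> Prop) :
  (forall x, P x -> Q x) -> countable Q -> countable P.
Proof. intros H [f Hf]. exists f. intros x Px. apply Hf, H, Px. Qed.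

Lemma countable_bind {X Y : Type} (P : X -> Prop) (Q : X -> Y -> Prop) :
  countable P -> (forall x, countable (Q x)) -> countable (fun y => exists x, P x /\ Q x y).
Proof.
  intros [eP HP] HQ. destruct (choice _ HQ) as [eQ HeQ].
  exists (fun n => let '(i, j) := Cantor.of_nat n in
                   match eP i with Some x => eQ x j | None => None end).
  intros y (x & Px & Qxy). destruct (HP x Px) as [i Ei]. destruct (HeQ x y Qxy) as [j Ej].
  exists (Cantor.to_nat (i, j)). rewrite Cantor.cancel_of_to, Ei; exact Ej.
Qed.

Lemma isW_le {X : Type} (a b : X -> A) : isW b -> (forall y, le (a y) (b y)) -> isW a.
Proof.
  intros Hb L. destruct (isW_Sum Hb) as [w Sw].
  destruct (Sum_exists_pointwise_le Sw L) as [v [Sv _]].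
  apply (isW_intro a v); [|exact Sv].
  apply (countable_sub _ (supp b)); [|apply Hb].
  intros x Hx Hbx. apply Hx, lex0. rewrite <- Hbx. apply L.
Qed.

(* This is where the top element is needed: [m y * h y] is dominated by [m y * top]. *)
Lemma isW_mulr {X : Type} (m h : X -> A) : isW m -> isW (fun y => mul (m y) (h y)).
Proof.
  intros Hm. destruct (has_top A) as [t Ht]. destruct (isW_Sum Hm) as [v Sv].
  apply (isW_le _ (fun y => mul (m y) t)); [|intros y; apply mul_le_l, Ht].
  apply (isW_intro _ (mul v t)); [|apply Sum_mul_r, Sv].
  apply (countable_sub _ (supp m)); [|apply Hm]. intros x Hx C. apply Hx. rewrite C. apply mul_0l.
Qed.

Lemma isW_mull {X : Type} (m h : X -> A) : isW m -> isW (fun y => mul (h y) (m y)).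
Proof.
  intros Hm. destruct (has_top A) as [t Ht]. destruct (isW_Sum Hm) as [v Sv].
  apply (isW_le _ (fun y => mul t (m y))); [|intros y; apply mul_le_r, Ht].
  apply (isW_intro _ (mul t v)); [|apply Sum_mul_l, Sv].
  apply (countable_sub _ (supp m)); [|apply Hm]. intros x Hx C. apply Hx. rewrite C. apply mul_0r.
Qed.

Lemma isW_lscale {X : Type} (u : A) (m : X -> A) : isW m -> isW (lscale u m).
Proof. apply (isW_mull m (fun _ => u)). Qed.

Lemma isW_rscale {X : Type} (m : X -> A) (u : A) : isW m -> isW (rscale m u).
Proof. apply (isW_mulr m (fun _ => u)). Qed.

Lemma eta_same {X : Type} (x : X) : @eta A X x x = one.
Proof. unfold eta. destruct (excluded_middle_informative (x = x)); congruence. Qed.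

Lemma eta_diff {X : Type} (x y : X) : x <> y -> @eta A X x y = zero.
Proof. unfold eta. destruct (excluded_middle_informative (x = y)); congruence. Qed.

Lemma supp_eta {X : Type} (x y : X) : supp (@eta A X x) y -> y = x.
Proof. intros H. apply NNPP; intros ne. apply H, eta_diff. congruence. Qed.

Lemma supp_lscale_eta {X : Type} (u : A) (x y : X) : supp (lscale u (eta x)) y -> y = x.
Proof. intros H. apply supp_eta. intros C. apply H. unfold lscale. rewrite C. apply mul_0r. Qed.

Lemma isW_eta {X : Type} (x : X) : isW (@eta A X x).
Proof.
  apply (isW_intro _ (eta x x)).
  - exists (fun _ => Some x). intros y Hy. exists 0. rewrite (supp_eta _ _ Hy); reflexivity.
  - apply (Sum_single _ x); [intros i Hi; apply eta_diff; auto | reflexivity].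
Qed.

Lemma Bind_iff {X Y : Type} (f : X -> Y -> A) m m' : Bind f m m' <->
  isW m /\ isWK f /\ isW m' /\ forall y, Sum (fun x => mul (m x) (f x y)) (m' y).
Proof.
  assert (Z : forall y x, ~ supp m x -> mul (m x) (f x y) = zero)
    by (intros y x Hx; rewrite (notin_supp m x Hx); apply mul_0l).
  unfold Bind, isWK.
  split; intros (H1 & H2 & H3 & H4); (split; [|split; [|split]]); auto;
    intros y; apply (HasSum_Sum (supp m)); auto.
Qed.

Lemma Bind_intro {X Y : Type} (f : X -> Y -> A) m m' : isW m -> isWK f -> isW m' ->
  (forall y, Sum (fun x => mul (m x) (f x y)) (m' y)) -> Bind f m m'.
Proof. intros; apply Bind_iff; auto. Qed.

Lemma Bind_isW_l {X Y : Type} {f : X -> Y -> A} {m m'} : Bind f m m' -> isW m.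
Proof. intros H; exact (proj1 H). Qed.

Lemma Bind_isW_r {X Y : Type} {f : X -> Y -> A} {m m'} : Bind f m m' -> isW m'.
Proof. intros H; exact (proj1 (proj2 (proj2 H))). Qed.

Lemma Bind_Sum {X Y : Type} {f : X -> Y -> A} {m m'} :
  Bind f m m' -> forall y, Sum (fun x => mul (m x) (f x y)) (m' y).
Proof. intros H. apply Bind_iff in H. apply H. Qed.

Lemma Bind_uniq {X Y : Type} {f : X -> Y -> A} {m m1 m2} : Bind f m m1 -> Bind f m m2 -> m1 = m2.
Proof. intros H1 H2. extensionality y. exact (Sum_uniq (Bind_Sum H1 y) (Bind_Sum H2 y)). Qed.

Lemma Bind_exists {X Y : Type} (f : X -> Y -> A) m : isW m -> isWK f -> exists m', Bind f m m'.
Proof.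
  intros Hm Hf. destruct (has_top A) as [t Ht]. destruct (isW_Sum Hm) as [v Sv].
  assert (Ex : forall h : X -> A, exists z, Sum (fun x => mul (m x) (h x)) z).
  { intros h. destruct (Sum_exists_pointwise_le (Sum_mul_r t Sv) (fun x => mul_le_l (m x) (Ht (h x))))
      as [z [Sz _]]. eauto. }
  destruct (choice _ (fun y => Ex (fun x => f x y))) as [m' Hm'].
  destruct (choice _ (fun x => isW_Sum (Hf x))) as [mass Hmass].
  destruct (Ex mass) as [z Sz].
  destruct (Fubini _ _ z (fun x => Sum_mul_l (m x) (Hmass x)) Sz) as [c [Hc Sc]].
  replace c with m' in Sc by (extensionality y; exact (Sum_uniq (Hm' y) (Hc y))).
  exists m'. apply Bind_intro; auto.
  apply (isW_intro _ z); [|exact Sc].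
  eapply countable_sub;
    [|exact (countable_bind (supp m) (fun x => supp (f x)) (proj1 Hm) (fun x => proj1 (Hf x)))].
  intros y Hy. destruct (Sum_neq0 (Hm' y) Hy) as [x Hx].
  exists x; split; intros C; apply Hx; rewrite C; [apply mul_0l | apply mul_0r].
Qed.

(* [bnd f m] is the Kleisli extension of [f] applied to [m]; it is junk unless [isW m] and [isWK f]. *)
Definition bnd {X Y : Type} (f : X -> Y -> A) (m : X -> A) : Y -> A :=
  epsilon (inhabits (fun _ => zero)) (fun m' => Bind f m m').

Lemma bnd_spec {X Y : Type} (f : X -> Y -> A) m : isW m -> isWK f -> Bind f m (bnd f m).
Proof. intros Hm Hf. unfold bnd. apply epsilon_spec, Bind_exists; auto. Qed.

Lemma bnd_eq {X Y : Type} {f : X -> Y -> A} {m m'} : Bind f m m' -> bnd f m = m'.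
Proof.
  intros H. apply Bind_iff in H as H'. destruct H' as (Hm & Hf & _).
  exact (Bind_uniq (bnd_spec f m Hm Hf) H).
Qed.

Lemma isW_bnd {X Y : Type} (f : X -> Y -> A) m : isW m -> isWK f -> isW (bnd f m).
Proof. intros; eapply Bind_isW_r, bnd_spec; eauto. Qed.

Lemma Bind_assoc {X Y Z : Type} (f1 : X -> Y -> A) (f2 : Y -> Z -> A) (h : X -> Z -> A) m m1 m2 :
  Bind f1 m m1 -> Bind f2 m1 m2 -> (forall s, Bind f2 (f1 s) (h s)) -> Bind h m m2.
Proof.
  intros B1 B2 Bh. apply Bind_iff in B1 as (Hm & _ & _ & S1), B2 as (_ & _ & Hm2 & S2).
  apply Bind_intro; auto.
  - intros s. exact (Bind_isW_r (Bh s)).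
  - intros z.
    assert (R : forall y, Sum (fun x => mul (mul (m x) (f1 x y)) (f2 y z)) (mul (m1 y) (f2 y z)))
      by (intros y; apply Sum_mul_r, S1).
    destruct (Fubini _ _ _ R (S2 z)) as [c [Hc Sc]].
    replace (fun x => mul (m x) (h x z)) with c; [exact Sc|].
    extensionality x. apply (Sum_uniq (Hc x)).
    replace (fun y => mul (mul (m x) (f1 x y)) (f2 y z)) with (fun y => mul (m x) (mul (f1 x y) (f2 y z)))
      by (extensionality y; apply mul_assoc).
    apply Sum_mul_l, (Bind_Sum (Bh x)).
Qed.

Lemma Bind_lscale {X Y : Type} {f : X -> Y -> A} {m m'} u :
  Bind f m m' -> Bind f (lscale u m) (lscale u m').
Proof.
  intros B. apply Bind_iff in B as (Hm & Hf & Hm' & S).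
  apply Bind_intro; auto using isW_lscale.
  intros y. unfold lscale.
  replace (fun x => mul (mul u (m x)) (f x y)) with (fun x => mul u (mul (m x) (f x y)))
    by (extensionality x; apply mul_assoc).
  apply Sum_mul_l, S.
Qed.

Lemma Bind_add {X Y : Type} {f1 f2 f : X -> Y -> A} {m n1 n2 n} :
  Bind f1 m n1 -> Bind f2 m n2 -> Bind f m n ->
  (forall s y, add (f1 s y) (f2 s y) = Some (f s y)) -> WPlus n1 n2 n.
Proof.
  intros B1 B2 B P y.
  apply (Sum_add_inv (Bind_Sum B1 y) (Bind_Sum B2 y) (Bind_Sum B y)).
  intros x. apply mul_addr, P.
Qed.

Lemma Bind_WSum {X Y T : Type} {f : X -> Y -> A} {ms : T -> X -> A} {m n n'} :
  WSum ms m -> (forall t, Bind f (ms t) (n t)) -> Bind f m n' -> WSum n n'.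
Proof.
  intros [_ Sm] Bn B. split; [exact (Bind_isW_r B)|]. intros y.
  assert (R : forall x, Sum (fun t => mul (ms t x) (f x y)) (mul (m x) (f x y)))
    by (intros x; apply Sum_mul_r, Sm).
  destruct (Fubini _ _ _ R (Bind_Sum B y)) as [c [Hc Sc]].
  replace (fun t => n t y) with c; [exact Sc|].
  extensionality t. exact (Sum_uniq (Hc t) (Bind_Sum (Bn t) y)).
Qed.

Lemma Bind_eta_r {X : Type} (m : X -> A) : isW m -> Bind (fun s => eta s) m m.
Proof.
  intros Hm. apply Bind_intro; auto; [intros x; apply isW_eta|].
  intros y. apply (Sum_single _ y).
  - intros i Hi. rewrite eta_diff; auto. apply mul_0r.
  - rewrite eta_same, mul_1r; reflexivity.
Qed.

Lemma Bind_eta_l {X Y : Type} (f : X -> Y -> A) s : isWK f -> Bind f (eta s) (f s).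
Proof.
  intros Hf. apply Bind_intro; auto using isW_eta.
  intros y. apply (Sum_single _ s).
  - intros i Hi. rewrite eta_diff; auto. apply mul_0l.
  - rewrite eta_same, mul_1l; reflexivity.
Qed.

Lemma Bind_lscale_eta {X : Type} (u : X -> A) (m : X -> A) : isW m ->
  Bind (fun s => lscale (u s) (eta s)) m (fun y => mul (m y) (u y)).
Proof.
  intros Hm. apply Bind_intro; auto using isW_mulr.
  - intros x; apply isW_lscale, isW_eta.
  - intros y. unfold lscale. apply (Sum_single _ y).
    + intros i Hi. rewrite eta_diff, !mul_0r; auto.
    + rewrite eta_same, mul_1r; reflexivity.
Qed.

Lemma supp_Bind {X : Type} {f : X -> X -> A} {m m'} (B : X -> Prop) : Bind f m m' ->
  (forall x, supp m x -> B x) -> (forall x, B x -> forall y, supp (f x) y -> B y) ->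
  forall y, supp m' y -> B y.
Proof.
  intros Bd Hm Hf y Hy.
  destruct (Sum_neq0 (Bind_Sum Bd y) Hy) as [x Hx].
  apply (Hf x); [apply Hm|]; intros C; apply Hx; rewrite C; [apply mul_0l | apply mul_0r].
Qed.

End Weights.

Lemma Sem_isWK {A : PSR} {C : cmd A} {f} : Sem C f -> isWK f.
Proof.
  induction 1; intros s.
  - apply isW_eta.
  - exact (Bind_isW_r (H1 s)).
  - apply (H1 s).
  - apply isW_lscale, isW_eta.
  - apply (proj1 H0).
  - apply isW_eta.
Qed.

Definition assume_kernel {A : PSR} (e : gexp A) : kernel A := fun s => lscale (geval e s) (eta s).

Lemma isWK_assume_kernel {A : PSR} (e : gexp A) : isWK (assume_kernel e).
Proof. intros s; apply isW_lscale, isW_eta. Qed.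

Section Unrolling.
Context {A : PSR} (g : kernel A) (e e' : gexp A).

Definition loop_body : kernel A := fun s => bnd g (assume_kernel e s).

Fixpoint unroll (m : state -> A) (n : nat) : state -> A :=
  match n with 0 => m | S n => unroll (bnd loop_body m) n end.

Definition unroll_exit (m : state -> A) (n : nat) : state -> A :=
  bnd (assume_kernel e') (unroll m n).

Lemma unroll_S n : forall m, unroll m (S n) = bnd loop_body (unroll m n).
Proof. induction n; intros m; [reflexivity|]. apply IHn. Qed.

Hypothesis isWK_g : isWK g.

Lemma Sem_loop_body (C : cmd A) : Sem C g -> Sem (Seq (Assume e) C) loop_body.
Proof.
  intros HC. apply (Sem_seq loop_body (Sem_assume e) HC).
  intros s. apply bnd_spec; [apply isWK_assume_kernel | exact isWK_g].
Qed.

Lemma isWK_loop_body : isWK loop_body.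
Proof. intros s. apply isW_bnd; [apply isWK_assume_kernel | exact isWK_g]. Qed.

Lemma loop_body_eq s : loop_body s = lscale (geval e s) (g s).
Proof. apply bnd_eq, Bind_lscale, Bind_eta_l, isWK_g. Qed.

Lemma isW_unroll n : forall m, isW m -> isW (unroll m n).
Proof. induction n; intros m Hm; [exact Hm|]. apply IHn, isW_bnd; [exact Hm | exact isWK_loop_body]. Qed.

Lemma Bind_unroll n : forall m, isW m -> Bind (fun s => unroll (eta s) n) m (unroll m n).
Proof.
  induction n; intros m Hm; [apply Bind_eta_r, Hm|].
  apply (Bind_assoc loop_body (fun s => unroll (eta s) n) _ m (bnd loop_body m)).
  - apply bnd_spec; [exact Hm | exact isWK_loop_body].
  - apply IHn, isW_bnd; [exact Hm | exact isWK_loop_body].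
  - intros s. simpl. rewrite (bnd_eq (Bind_eta_l loop_body s isWK_loop_body)).
    apply IHn, isWK_loop_body.
Qed.

Lemma Bind_unroll_exit n m : isW m -> Bind (fun s => unroll_exit (eta s) n) m (unroll_exit m n).
Proof.
  intros Hm. apply (Bind_assoc (fun s => unroll (eta s) n) (assume_kernel e') _ m (unroll m n)).
  - apply Bind_unroll, Hm.
  - apply bnd_spec; [apply isW_unroll, Hm | apply isWK_assume_kernel].
  - intros s. apply bnd_spec; [apply isW_unroll, isW_eta | apply isWK_assume_kernel].
Qed.

Section LeastFixpoint.
Context (f : kernel A).
Hypothesis lfp_f : IsLfp g e e' f.

Lemma isWK_lfp : isWK f.
Proof. exact (proj1 lfp_f). Qed.

Lemma lfp_unfold s y :
  add (mul (geval e s) (bnd f (g s) y)) (mul (geval e' s) (eta s y)) = Some (f s y).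
Proof.
  destruct lfp_f as [_ [P _]]. destruct (P s) as [_ [k [Bk W]]].
  rewrite (bnd_eq Bk). apply W.
Qed.

Lemma bnd_lfp_unfold m : isW m -> WPlus (unroll_exit m 0) (bnd f (bnd loop_body m)) (bnd f m).
Proof.
  intros Hm.
  assert (Bf : Bind (fun x => lscale (geval e x) (bnd f (g x))) m (bnd f (bnd loop_body m))).
  { apply (Bind_assoc loop_body f _ m (bnd loop_body m)).
    - apply bnd_spec; [exact Hm | exact isWK_loop_body].
    - apply bnd_spec; [apply isW_bnd; [exact Hm | exact isWK_loop_body] | exact isWK_lfp].
    - intros s. rewrite loop_body_eq. apply Bind_lscale, bnd_spec; [apply isWK_g | exact isWK_lfp]. }
  apply (Bind_add (bnd_spec _ _ Hm (isWK_assume_kernel e')) Bf (bnd_spec _ _ Hm isWK_lfp)).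
  intros s y. unfold assume_kernel, lscale. rewrite add_comm. apply lfp_unfold.
Qed.

Lemma bnd_lfp_fsum n : forall m, isW m -> forall y, exists r,
  fsum (fun k => unroll_exit m k y) (seq 0 n) = Some r /\
  add r (bnd f (unroll m n) y) = Some (bnd f m y).
Proof.
  induction n; intros m Hm y; [exists zero; split; [reflexivity | apply add_0l]|].
  destruct (IHn _ (isW_bnd _ _ Hm isWK_loop_body) y) as [r1 [E1 A1]].
  change (seq 0 (S n)) with (0 :: seq 1 n).
  rewrite <- seq_shift, fsum_cons, fsum_map.
  change (fun j => unroll_exit m (S j) y) with (fun j => unroll_exit (bnd loop_body m) j y).
  rewrite E1, oadd_SS.
  assert (E : oadd (oadd (Some (unroll_exit m 0 y)) (Some r1)) (Some (bnd f (unroll (bnd loop_body m) n) y))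
              = Some (bnd f m y))
    by (rewrite oadd_assoc, (oadd_SS r1), A1, oadd_SS; exact (bnd_lfp_unfold m Hm y)).
  rewrite (oadd_SS (unroll_exit m 0 y)) in E.
  destruct (add (unroll_exit m 0 y) r1) as [r|]; [exists r; split; auto | discriminate].
Qed.

Lemma Sum_unroll_exit_le m : isW m ->
  forall y, exists v, Sum (fun n => unroll_exit m n y) v /\ le v (bnd f m y).
Proof.
  intros Hm y. apply Sum_exists_le. intros l N.
  assert (Inc : incl l (seq 0 (S (list_max l)))).
  { intros x Hx. apply in_seq.
    pose proof (proj1 (list_max_le l (list_max l)) (le_n _)) as F.
    rewrite Forall_forall in F. specialize (F x Hx). lia. }
  destruct (bnd_lfp_fsum (S (list_max l)) m Hm y) as [r0 [E0 A0]].
  destruct (fsum_incl _ N (seq_NoDup _ 0) Inc E0) as [r1 [E1 L1]].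
  exists r1; split; [exact E1 | exact (le_trans L1 (le_addl A0))].
Qed.

Definition unroll_sum : kernel A :=
  fun s y => epsilon (inhabits zero) (fun v => Sum (fun n => unroll_exit (eta s) n y) v).

Lemma unroll_sum_spec s y : Sum (fun n => unroll_exit (eta s) n y) (unroll_sum s y).
Proof.
  unfold unroll_sum. apply epsilon_spec.
  destruct (Sum_unroll_exit_le (eta s) (isW_eta s) y) as [v [H _]]. eauto.
Qed.

Lemma unroll_sum_le_lfp s y : le (unroll_sum s y) (f s y).
Proof.
  destruct (Sum_unroll_exit_le (eta s) (isW_eta s) y) as [v [H L]].
  rewrite (Sum_uniq (unroll_sum_spec s y) H), <- (bnd_eq (Bind_eta_l f s isWK_lfp)). exact L.
Qed.

Lemma isWK_unroll_sum : isWK unroll_sum.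
Proof. intros s. apply (isW_le _ (f s)); [apply isWK_lfp | apply unroll_sum_le_lfp]. Qed.

Lemma Sum_unroll_exit_bnd m : isW m -> forall y, Sum (fun n => unroll_exit m n y) (bnd unroll_sum m y).
Proof.
  intros Hm y.
  assert (R : forall x, Sum (fun n => mul (m x) (unroll_exit (eta x) n y)) (mul (m x) (unroll_sum x y)))
    by (intros x; apply Sum_mul_l, unroll_sum_spec).
  destruct (Fubini _ _ _ R (Bind_Sum (bnd_spec _ m Hm isWK_unroll_sum) y)) as [c [Hc Sc]].
  replace (fun n => unroll_exit m n y) with c; [exact Sc|].
  extensionality n. exact (Sum_uniq (Hc n) (Bind_Sum (Bind_unroll_exit n m Hm) y)).
Qed.

(* Of the unrollings from [s], the 0th is the exit term of the fixed-point equation and the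
   others sum to its body term. *)
Lemma unroll_sum_fixpoint : PhiRel g e e' unroll_sum unroll_sum.
Proof.
  intros s. split; [apply isWK_unroll_sum|].
  exists (bnd unroll_sum (g s)). split; [apply bnd_spec; [apply isWK_g | exact isWK_unroll_sum]|].
  intros y. destruct (Sum_nat_shift _ _ (unroll_sum_spec s y)) as [w [Sw Aw]].
  assert (E0 : unroll_exit (eta s) 0 y = mul (geval e' s) (eta s y)).
  { unfold unroll_exit; simpl.
    rewrite (bnd_eq (Bind_eta_l (assume_kernel e') s (isWK_assume_kernel e'))). reflexivity. }
  assert (E1 : (fun n => unroll_exit (eta s) (S n) y) = (fun n => unroll_exit (loop_body s) n y)).
  { extensionality n. unfold unroll_exit; simpl.
    rewrite (bnd_eq (Bind_eta_l loop_body s isWK_loop_body)). reflexivity. }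
  rewrite E1 in Sw. rewrite (Sum_uniq Sw (Sum_unroll_exit_bnd _ (isWK_loop_body s) y)), E0,
    loop_body_eq, (bnd_eq (Bind_lscale (geval e s) (bnd_spec unroll_sum (g s) (isWK_g s) isWK_unroll_sum)))
    in Aw.
  unfold lscale in *. rewrite add_comm. exact Aw.
Qed.

Lemma lfp_unroll_sum : f = unroll_sum.
Proof.
  destruct lfp_f as [_ [_ L]].
  extensionality s. extensionality y. apply le_antisym; [|apply unroll_sum_le_lfp].
  destruct (L unroll_sum isWK_unroll_sum unroll_sum_fixpoint s) as [m [_ W]].
  exists (m y). apply W.
Qed.

Lemma Sum_unroll_exit m : isW m -> forall y, Sum (fun n => unroll_exit m n y) (bnd f m y).
Proof. intros Hm. rewrite lfp_unroll_sum. apply Sum_unroll_exit_bnd, Hm. Qed.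

End LeastFixpoint.

End Unrolling.

Definition preserves {A : PSR} (f : kernel A) (B : state -> Prop) : Prop :=
  forall s, B s -> forall y, supp (f s) y -> B y.

Section Preservation.
Context {A : PSR} (B : state -> Prop).

Lemma preserves_assume_kernel (e : gexp A) : preserves (assume_kernel e) B.
Proof. intros s Bs y Hy. rewrite (supp_lscale_eta _ _ _ Hy); exact Bs. Qed.

Lemma supp_unroll (g : kernel A) e : isWK g -> preserves g B ->
  forall n m, isW m -> (forall x, supp m x -> B x) -> forall y, supp (unroll g e m n) y -> B y.
Proof.
  intros Wg Pg. induction n; intros m Hm Sm; [exact Sm|].
  apply IHn; [apply isW_bnd; [exact Hm | apply isWK_loop_body, Wg]|].
  apply (supp_Bind B (bnd_spec _ m Hm (isWK_loop_body g e Wg)) Sm).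
  intros s Bs. apply (supp_Bind B (bnd_spec g _ (isWK_assume_kernel e s) Wg)); [|exact Pg].
  exact (preserves_assume_kernel e s Bs).
Qed.

(* The loop denotes the sum of its unrollings, each of which preserves [B]. *)
Lemma preserves_lfp (g f : kernel A) e e' : isWK g -> IsLfp g e e' f -> preserves g B -> preserves f B.
Proof.
  intros Wg Hf Pg s Bs y Hy.
  rewrite <- (bnd_eq (Bind_eta_l f s (proj1 Hf))) in Hy.
  destruct (Sum_neq0 (Sum_unroll_exit g e e' Wg f Hf (eta s) (isW_eta s) y) Hy) as [n Hn].
  apply (supp_Bind B (bnd_spec (assume_kernel e') _ (isW_unroll g e Wg n _ (isW_eta s))
                               (isWK_assume_kernel e'))); [| apply preserves_assume_kernel | exact Hn].
  apply (supp_unroll g e Wg Pg n _ (isW_eta s)). intros x Hx. rewrite (supp_eta _ _ Hx); exact Bs.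
Qed.

Lemma Sem_preserves (C : cmd A) f : Sem C f ->
  (forall x, free B x -> modv C x -> False) -> preserves f B.
Proof.
  induction 1; intros Hmod s Bs y Hy; simpl in Hmod.
  - rewrite (supp_eta _ _ Hy); exact Bs.
  - apply (supp_Bind B (H1 s)); [| |exact Hy].
    + apply (IHSem1 (fun z Fz Mz => Hmod z Fz (or_introl Mz)) s Bs).
    + apply (IHSem2 (fun z Fz Mz => Hmod z Fz (or_intror Mz))).
  - destruct (add_neq0 (proj2 (H1 s) y) Hy) as [N|N].
    + exact (IHSem1 (fun z Fz Mz => Hmod z Fz (or_introl Mz)) s Bs y N).
    + exact (IHSem2 (fun z Fz Mz => Hmod z Fz (or_intror Mz)) s Bs y N).
  - exact (preserves_assume_kernel e s Bs y Hy).
  - exact (preserves_lfp g f e e' (Sem_isWK H) H0 (IHSem Hmod) s Bs y Hy).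
  - rewrite (supp_eta _ _ Hy). apply NNPP; intros C. apply (Hmod x); [|reflexivity].
    exists s, (eeval E s); auto.
Qed.

End Preservation.

Section Inversion.
Context {A : PSR}.

Lemma Sem_skip_inv (f : kernel A) : Sem Skip f -> f = fun s => eta s.
Proof. intros H; inversion H; reflexivity. Qed.

Lemma Sem_seq_inv (C1 C2 : cmd A) f : Sem (Seq C1 C2) f ->
  exists f1 f2, Sem C1 f1 /\ Sem C2 f2 /\ forall s, Bind f2 (f1 s) (f s).
Proof. intros H; inversion H; subst; eauto 6. Qed.

Lemma Sem_choice_inv (C1 C2 : cmd A) f : Sem (Choice C1 C2) f ->
  exists f1 f2, Sem C1 f1 /\ Sem C2 f2 /\ forall s, isW (f s) /\ WPlus (f1 s) (f2 s) (f s).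
Proof. intros H; inversion H; subst; eauto 6. Qed.

Lemma Sem_assume_inv (e : gexp A) f : Sem (Assume e) f -> f = assume_kernel e.
Proof. intros H; inversion H; reflexivity. Qed.

Lemma Sem_iter_inv (C : cmd A) e e' f : Sem (Iter C e e') f -> exists g, Sem C g /\ IsLfp g e e' f.
Proof. intros H; inversion H; subst; eauto. Qed.

Lemma Sem_assign_inv x E (f : kernel A) : Sem (Assign x E) f -> f = fun s => eta (update s x (eeval E s)).
Proof. intros H; inversion H; reflexivity. Qed.

End Inversion.

Section Soundness.
Context {A : PSR}.
Implicit Types (P Q R : assn A) (C : cmd A).

Lemma valid_skip P : IsAssn P -> valid P Skip P.
Proof.
  intros HP f Hs m Hm. rewrite (Sem_skip_inv _ Hs).
  exists m; split; [apply Bind_eta_r, HP, Hm | exact Hm].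
Qed.

Lemma valid_seq P R Q C1 C2 : valid P C1 R -> valid R C2 Q -> valid P (Seq C1 C2) Q.
Proof.
  intros V1 V2 f Hs m Hm. destruct (Sem_seq_inv _ _ _ Hs) as (f1 & f2 & H1 & H2 & H).
  destruct (V1 f1 H1 m Hm) as [m1 [B1 R1]]. destruct (V2 f2 H2 m1 R1) as [m2 [B2 Q2]].
  exists m2; split; [exact (Bind_assoc f1 f2 f m m1 m2 B1 B2 H) | exact Q2].
Qed.

Lemma valid_plus P Q1 Q2 C1 C2 :
  valid P C1 Q1 -> valid P C2 Q2 -> valid P (Choice C1 C2) (aoplus Q1 Q2).
Proof.
  intros V1 V2 f Hs m Hm. destruct (Sem_choice_inv _ _ _ Hs) as (f1 & f2 & H1 & H2 & H).
  destruct (V1 f1 H1 m Hm) as [n1 [B1 R1]]. destruct (V2 f2 H2 m Hm) as [n2 [B2 R2]].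
  pose proof (bnd_spec f m (Bind_isW_l B1) (fun s => proj1 (H s))) as B.
  exists (bnd f m); split; [exact B|].
  split; [exact (Bind_isW_r B)|]. exists n1, n2. split; [exact R1|split; [exact R2|]].
  apply (Bind_add B1 B2 B). intros s; apply (H s).
Qed.

Lemma valid_assume P e u : IsAssn P -> (forall m s, P m -> supp m s -> geval e s = u) ->
  valid P (Assume e) (arscale P u).
Proof.
  intros HP He f Hs m Hm. rewrite (Sem_assume_inv _ _ Hs).
  exists (rscale m u). split; [|exists m; auto].
  replace (rscale m u) with (fun y => mul (m y) (geval e y)); [apply Bind_lscale_eta, HP, Hm|].
  extensionality y. unfold rscale. destruct (classic (supp m y)) as [S|S].
  - rewrite (He m y Hm S); reflexivity.
  - rewrite (notin_supp m y S), !mul_0l; reflexivity.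
Qed.

Lemma valid_iter (Ps Qs : nat -> assn A) Qinf C e e' : converges Qs Qinf ->
  (forall n, valid (Ps n) (Seq (Assume e) C) (Ps (S n))) ->
  (forall n, valid (Ps n) (Assume e') (Qs n)) ->
  valid (Ps 0) (Iter C e e') Qinf.
Proof.
  intros Conv Vbody Vexit f Hs m Hm. destruct (Sem_iter_inv _ _ _ _ Hs) as (g & Hg & Hf).
  pose proof (Sem_isWK Hg) as Wg. pose proof (Sem_loop_body g e Wg C Hg) as Hbody.
  assert (Wm : isW m) by (destruct (Vbody 0 _ Hbody m Hm) as [m' [B _]]; exact (Bind_isW_l B)).
  assert (Inv : forall n, Ps n (unroll g e m n)).
  { induction n as [|n IH]; [exact Hm|].
    destruct (Vbody n _ Hbody _ IH) as [m' [B Pm']].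
    rewrite unroll_S, (bnd_eq B). exact Pm'. }
  assert (Exit : forall n, Qs n (unroll_exit g e e' m n)).
  { intros n. destruct (Vexit n _ (Sem_assume e') _ (Inv n)) as [m' [B Qm']].
    unfold unroll_exit. fold (assume_kernel e') in B. rewrite (bnd_eq B). exact Qm'. }
  pose proof (bnd_spec f m Wm (proj1 Hf)) as B.
  exists (bnd f m); split; [exact B|].
  apply (Conv _ Exit). split; [exact (Bind_isW_r B)|].
  exact (Sum_unroll_exit g e e' Wg f Hf m Wm).
Qed.

Lemma valid_scale P Q C u : valid P C Q -> valid (alscale u P) C (alscale u Q).
Proof.
  intros V f Hs m [m0 [P0 ->]]. destruct (V f Hs m0 P0) as [m0' [B Q0]].
  exists (lscale u m0'). split; [apply Bind_lscale, B | exists m0'; auto].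
Qed.

Lemma valid_conj P1 P2 Q1 Q2 C :
  valid P1 C Q1 -> valid P2 C Q2 -> valid (acap P1 P2) C (acap Q1 Q2).
Proof.
  intros V1 V2 f Hs m [H1 H2].
  destruct (V1 f Hs m H1) as [m1 [B1 R1]]. destruct (V2 f Hs m H2) as [m2 [B2 R2]].
  rewrite (Bind_uniq B2 B1) in R2. exists m1; split; [exact B1 | split; assumption].
Qed.

Lemma valid_choice (T : Type) (Ph Ph' : T -> assn A) C :
  (forall t, valid (Ph t) C (Ph' t)) -> valid (abigoplus Ph) C (abigoplus Ph').
Proof.
  intros V f Hs m [ms [Hms Wm]].
  assert (Bt : forall t, Bind f (ms t) (bnd f (ms t)) /\ Ph' t (bnd f (ms t))).
  { intros t. destruct (V t f Hs (ms t) (Hms t)) as [m' [B Pm']]. rewrite (bnd_eq B). auto. }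
  pose proof (bnd_spec f m (proj1 Wm) (Sem_isWK Hs)) as B.
  exists (bnd f m); split; [exact B|].
  exists (fun t => bnd f (ms t)). split; [intros t; apply Bt|].
  exact (Bind_WSum Wm (fun t => proj1 (Bt t)) B).
Qed.

Lemma valid_assign P x E : valid (asubst P E x) (Assign x E) P.
Proof. intros f Hs m [_ [m' [B Pm']]]. rewrite (Sem_assign_inv _ _ _ Hs). eauto. Qed.

Lemma valid_constancy P Q C (B : state -> Prop) : valid P C Q ->
  (forall x, free B x -> modv C x -> False) -> valid (acap P (abox B)) C (acap Q (abox B)).
Proof.
  intros V Hmod f Hs m [Pm [_ Sm]]. destruct (V f Hs m Pm) as [m' [Bd Qm]].
  exists m'; split; [exact Bd|]. split; [exact Qm|]. split; [exact (Bind_isW_r Bd)|].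
  exact (supp_Bind B Bd Sm (Sem_preserves B C f Hs Hmod)).
Qed.

Lemma soundness P C Q : Deriv P C Q -> valid P C Q.
Proof.
  induction 1.
  - apply valid_skip; assumption.
  - eapply valid_seq; eassumption.
  - apply valid_plus; assumption.
  - apply valid_assume; assumption.
  - eapply valid_iter; eassumption.
  - intros f _ m [].
  - intros f Hs m Hm. pose proof (bnd_spec f m (H m Hm) (Sem_isWK Hs)) as B.
    exists (bnd f m); split; [exact B | exact (Bind_isW_r B)].
  - apply valid_scale; assumption.
  - intros f Hs m [Hm|Hm].
    + destruct (IHDeriv1 f Hs m Hm) as [m' [B Qm]]. exists m'; split; [exact B | left; exact Qm].
    + destruct (IHDeriv2 f Hs m Hm) as [m' [B Qm]]. exists m'; split; [exact B | right; exact Qm].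
  - apply valid_conj; assumption.
  - apply valid_choice; assumption.
  - intros f Hs m [t Ht]. destruct (H0 t f Hs m Ht) as [m' [B Q']].
    exists m'; split; [exact B | exists t; exact Q'].
  - intros f Hs m Hm. destruct (IHDeriv f Hs m (H1 m Hm)) as [m' [B Qm]]. eauto.
  - apply valid_assign.
  - apply valid_constancy; assumption.
Qed.

End Soundness.

Section Completeness.
Context {A : PSR}.

Definition asing (m : state -> A) : assn A := fun m' => m' = m.

Lemma IsAssn_asing m : isW m -> IsAssn (asing m).
Proof. intros H x ->; exact H. Qed.

Definition sing_complete (C : cmd A) (f : kernel A) : Prop :=
  forall m, isW m -> Deriv (asing m) C (asing (bnd f m)).

Lemma WSum_point_mass (m : state -> A) : isW m -> WSum (fun s => lscale (m s) (eta s)) m.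
Proof.
  intros Hm. split; [exact Hm|]. intros y. apply (Sum_single _ y); unfold lscale.
  - intros i Hi. rewrite eta_diff, mul_0r; auto.
  - rewrite eta_same, mul_1r; reflexivity.
Qed.

(* On a point mass the guard is constant, so (Assume) applies; (Choice) recombines the point masses. *)
Lemma sing_complete_assume e : sing_complete (Assume e) (assume_kernel e).
Proof.
  intros m Hm. set (pt := fun s => lscale (m s) (@eta A state s)).
  assert (Wpt : forall s, isW (pt s)) by (intros s; apply isW_lscale, isW_eta).
  apply (D_conseq (P := abigoplus (fun s => asing (pt s)))
                  (Q := abigoplus (fun s => arscale (asing (pt s)) (geval e s)))).
  - apply IsAssn_asing, Hm.
  - apply IsAssn_asing, isW_bnd; [exact Hm | apply isWK_assume_kernel].
  - intros x ->. exists pt. split; [intros t; reflexivity | apply WSum_point_mass, Hm].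
  - apply D_choice. intros s. apply D_assume.
    + apply IsAssn_asing, Wpt.
    + intros x [m0 [-> ->]]. apply isW_rscale, Wpt.
    + intros m0 y -> Hy. rewrite (supp_lscale_eta _ _ _ Hy); reflexivity.
  - intros x [ms [Hms [_ Sx]]]. unfold asing.
    unfold assume_kernel. rewrite (bnd_eq (Bind_lscale_eta (fun s => geval e s) m Hm)).
    extensionality y. apply (Sum_uniq (Sx y)). apply (Sum_single _ y).
    + intros i Hi. destruct (Hms i) as [m0 [-> ->]]. unfold rscale, pt, lscale.
      rewrite eta_diff, mul_0r, mul_0l; auto.
    + destruct (Hms y) as [m0 [-> ->]]. unfold rscale, pt, lscale. rewrite eta_same, mul_1r; reflexivity.
Qed.

Lemma sing_complete_skip : sing_complete Skip (fun s => eta s).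
Proof. intros m Hm. rewrite (bnd_eq (Bind_eta_r m Hm)). apply D_skip, IsAssn_asing, Hm. Qed.

Lemma sing_complete_seq C1 C2 f1 f2 f : Sem C1 f1 -> Sem C2 f2 ->
  (forall s, Bind f2 (f1 s) (f s)) -> sing_complete C1 f1 -> sing_complete C2 f2 ->
  sing_complete (Seq C1 C2) f.
Proof.
  intros H1 H2 Hf IH1 IH2 m Hm.
  pose proof (bnd_spec f1 m Hm (Sem_isWK H1)) as B1.
  apply (D_seq (R := asing (bnd f1 m))); [apply IH1, Hm|].
  replace (bnd f m) with (bnd f2 (bnd f1 m)); [apply IH2, (Bind_isW_r B1)|].
  symmetry. apply bnd_eq, (Bind_assoc f1 f2 f m (bnd f1 m) _ B1); [|exact Hf].
  apply bnd_spec; [exact (Bind_isW_r B1) | exact (Sem_isWK H2)].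
Qed.

Lemma sing_complete_choice C1 C2 f1 f2 f : Sem C1 f1 -> Sem C2 f2 ->
  (forall s, isW (f s) /\ WPlus (f1 s) (f2 s) (f s)) -> sing_complete C1 f1 -> sing_complete C2 f2 ->
  sing_complete (Choice C1 C2) f.
Proof.
  intros H1 H2 Hf IH1 IH2 m Hm.
  assert (Wf : isWK f) by (intros s; apply Hf).
  apply (D_conseq (P := asing m) (Q := aoplus (asing (bnd f1 m)) (asing (bnd f2 m)))).
  - apply IsAssn_asing, Hm.
  - apply IsAssn_asing, isW_bnd; [exact Hm | exact Wf].
  - intros x Hx; exact Hx.
  - apply D_plus; [apply IH1 | apply IH2]; exact Hm.
  - intros x [_ [m1 [m2 [-> [-> Px]]]]]. unfold asing.
    pose proof (Bind_add (bnd_spec f1 m Hm (Sem_isWK H1)) (bnd_spec f2 m Hm (Sem_isWK H2))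
                  (bnd_spec f m Hm Wf) (fun s => proj2 (Hf s))) as Pb.
    extensionality y. specialize (Px y). rewrite Pb in Px. injection Px as ->. reflexivity.
Qed.

Lemma sing_complete_iter C e e' g f : Sem C g -> IsLfp g e e' f -> sing_complete C g ->
  sing_complete (Iter C e e') f.
Proof.
  intros HC Hf IH m Hm. pose proof (Sem_isWK HC) as Wg.
  apply (D_iter (fun n => asing (unroll g e m n)) (Qs := fun n => asing (unroll_exit g e e' m n))).
  - apply IsAssn_asing, isW_bnd; [exact Hm | exact (proj1 Hf)].
  - intros ms Hms x [_ Sx]. unfold asing.
    replace ms with (fun n => unroll_exit g e e' m n) in Sx by (extensionality n; symmetry; apply Hms).
    extensionality y. exact (Sum_uniq (Sx y) (Sum_unroll_exit g e e' Wg f Hf m Hm y)).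
  - intros n. rewrite unroll_S.
    apply (sing_complete_seq _ _ _ _ _ (Sem_assume e) HC); [|apply sing_complete_assume | exact IH |].
    + intros s. apply bnd_spec; [apply isWK_assume_kernel | exact Wg].
    + apply isW_unroll; assumption.
  - intros n. apply sing_complete_assume, isW_unroll; assumption.
Qed.

Lemma sing_complete_assign x E : sing_complete (Assign x E) (fun s => eta (update s x (eeval E s))).
Proof.
  intros m Hm. set (k := fun s => @eta A state (update s x (eeval E s))).
  assert (Wk : isWK k) by (intros s; apply isW_eta).
  apply (D_conseq (P := asubst (asing (bnd k m)) E x) (Q := asing (bnd k m))).
  - apply IsAssn_asing, Hm.
  - apply IsAssn_asing, isW_bnd; [exact Hm | exact Wk].
  - intros y ->. split; [exact Hm|]. exists (bnd k m). split; [apply bnd_spec; assumption | reflexivity].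
  - apply D_assign, IsAssn_asing, isW_bnd; [exact Hm | exact Wk].
  - intros y Hy; exact Hy.
Qed.

Lemma Sem_sing_complete C f : Sem C f -> sing_complete C f.
Proof.
  induction 1.
  - exact sing_complete_skip.
  - exact (sing_complete_seq _ _ _ _ _ H H0 H1 IHSem1 IHSem2).
  - exact (sing_complete_choice _ _ _ _ _ H H0 H1 IHSem1 IHSem2).
  - exact (sing_complete_assume e).
  - exact (sing_complete_iter _ _ _ _ _ H H0 IHSem).
  - exact (sing_complete_assign x E).
Qed.

End Completeness.

Theorem theorem4p1 (A : PSR) (C : cmd A) (P Q : assn A) :
  well_formed C -> IsAssn P -> IsAssn Q ->
  (valid P C Q <-> Deriv P C Q).
Proof.
  intros [f Hs] HP HQ. split; [|apply soundness].
  intros V.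
  apply (D_conseq (P := abigcup (fun t : {m | P m} => asing (proj1_sig t)))
                  (Q := abigcup (fun t : {m | P m} => asing (bnd f (proj1_sig t)))) HP HQ).
  - intros m Pm. exists (exist _ m Pm). reflexivity.
  - apply D_exists. intros [m Pm]. exact (Sem_sing_complete C f Hs m (HP m Pm)).
  - intros m' [[m Pm] ->]. cbn. destruct (V f Hs m Pm) as [m' [B Qm]]. rewrite (bnd_eq B). exact Qm.
Qed.
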